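(* Let $P=(\mathcal A_P,\mathcal F_P)$ be a (possibly partial) policy over a DTD $D$. The following are equivalent: (1) $P$ is quasiconsistent; (2) $P$ is consistent; (3) $T(\mathcal A_P)\cap\mathcal F_P=\emptyset$.
   Context: Let $\mathcal L$ be an infinite set of labels and $\mathsf{str}\notin\mathcal L$ a special symbol. A DTD is a triple $D=(Ele,Rg,rt)$ where $Ele\subseteq\mathcal L$ is finite, $rt\in Ele$ is the root type, and for each $A\in Ele$, $Rg(A)$ is one of: $\mathsf{str}$, $\epsilon$, $B_1,\dots,B_n$ (concatenation), $B_1+\dots+B_n$ (disjunction), or $B_1^*$ (Kleene star), where the $B_i\in Ele$ are pairwise distinct and are called subelement types of $A$. DTDs are non-recursive: the directed graph on $Ele$ with an edge $A\to B$ whenever $B$ is a subelement type of $A$ is acyclic. $\le_D$ denotes the reflexive–transitive closure of the subelement relation. We assume every element type is reachable from the root: $rt\le_D A$ for all $A\in Ele$. An XML tree is $t=(N_t,E_t,\lambda_t,r_t,v_t)$: a finite rooted unordered tree with node set $N_t$, parent–child edge set $E_t$, root $r_t$, labelling $\lambda_t:N_t\to\mathcal L\cup\{\mathsf{str}\}$, and a function $v_t$ assigning a string to each node labelled $\mathsf{str}$. The tree $t$ conforms to $D$ at $A\in Ele$ if $\lambda_t(r_t)=A$, every node is labelled by an element of $Ele\cup\{\mathsf{str}\}$, every node labelled $B\in Ele$ has children whose labels, listed in some order, form a word of the language of the regular expression $Rg(B)$ (with $Rg(B)=\mathsf{str}$ meaning a single child labelled $\mathsf{str}$ and $\epsilon$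 meaning no children), and every node labelled $\mathsf{str}$ is a leaf with a defined string value. $I_D(A)$ is the set of trees conforming to $D$ at $A$, and $I_D=I_D(rt)$. Trees $t_1,t_2$ are isomorphic, $t_1\equiv t_2$, if there is a bijection $N_{t_1}\to N_{t_2}$ preserving root, edges, labels and string values. Atomic updates on a tree $t$: $\mathsf{insert}(n,t')$ adds the tree $t'$ with its root as a new child of $n$; $\mathsf{delete}(n)$ removes $n$ and all its descendants; $\mathsf{replace}(n,t')$ removes the subtree rooted at $n$ and attaches $t'$ (by its root) as a child of the former parent of $n$; $\mathsf{replace}(n,s)$, for a string $s$, sets the string value of $n$ to $s$. An update is valid on $t$ if $n\in N_t$ and the tree $t'$ (if present) has node set disjoint from $N_t$; $[\![op]\!](t)$ denotes the result. For a sequence, $[\![op_1;\dots;op_k]\!](t)=[\![op_k]\!](\cdots[\![op_1]\!](t)\cdots)$, and the sequence is valid on $t$ if each $op_i$ is valid on the result of $op_1;\dots;op_{i-1}$. Update access types (UATs) are expressions $(A,\mathsf{insert}(B))$, $(A,\mathsf{delete}(B))$, $(A,\mathsf{replace}(B,B'))$ with $B\neq B'$, and $(A,\mathsf{replace}(\mathsf{str},\mathsf{str}))$, with $A\in Ele$; $A$ is the element type of the UAT. Such a UAT is valid for $D$ iff, respectively: $Rg(A)=B^*$; $Rg(A)=B^*$; $Rg(A)=B_1+\dots+B_n$ with $B,B'\in\{B_1,\dots,B_n\}$, $B\neq B'$; $Rg(A)=\mathsf{str}$. $\mathrm{valid}(D)$ is the set of UATs valid for $D$. An atomic update matches a UAT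 on $t$ as follows: $\mathsf{insert}(n,t')$ matches $(A,\mathsf{insert}(B))$ if $\lambda_t(n)=A$ and $t'\in I_D(B)$; $\mathsf{delete}(n)$ matches $(A,\mathsf{delete}(B))$ if $\lambda_t(n)=B$ and the parent of $n$ is labelled $A$; $\mathsf{replace}(n,t')$ matches $(A,\mathsf{replace}(B,B'))$ if $\lambda_t(n)=B$, the parent of $n$ is labelled $A$, $t'\in I_D(B')$ and $B\neq B'$; $\mathsf{replace}(n,s)$ matches $(A,\mathsf{replace}(\mathsf{str},\mathsf{str}))$ if $\lambda_t(n)=\mathsf{str}$ and the parent of $n$ is labelled $A$. For a set $S$ of UATs, $[\![S]\!]_t$ is the set of atomic updates matching some element of $S$ on $t$. A sequence $op_1;\dots;op_k$ is allowed on $t$ by $S$ if it is valid on $t$ and $op_i\in[\![S]\!]_{t_{i-1}}$ for all $i$, where $t_0=t$ and $t_i=[\![op_i]\!](t_{i-1})$. A policy over $D$ is a pair $P=(\mathcal A,\mathcal F)$ with $\mathcal A,\mathcal F\subseteq\mathrm{valid}(D)$ and $\mathcal A\cap\mathcal F=\emptyset$ (allowed and forbidden UATs); it is total if $\mathcal A\cup\mathcal F=\mathrm{valid}(D)$ and partial otherwise. $P$ is consistent if there exist no $t\in I_D$, no sequence $op_1;\dots;op_k$ ($k\ge1$) allowed on $t$ by $\mathcal A$, and no $op_0\in[\![\mathcal F]\!]_t$ valid on $t$ and non-trivial (i.e. $[\![op_0]\!](t)\not\equiv t$) such that $[\![op_1;\dots;op_k]\!](t)\equiv[\![op_0]\!](t)$.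 Writing $P=(\mathcal A_P,\mathcal F_P)$, the information ordering is $P\sqsubseteq Q$ iff $\mathcal A_P\subseteq\mathcal A_Q$ and $\mathcal F_P\subseteq\mathcal F_Q$; then $Q$ is said to extend $P$. A policy $P$ is quasiconsistent if it has a consistent total extension. For $S\subseteq\mathrm{valid}(D)$ and $A\in Ele$ with $Rg(A)=B_1+\dots+B_n$, $G_A(S)$ is the directed graph on vertices $B_1,\dots,B_n$ with an edge $(B_i,B_j)$ iff $(A,\mathsf{replace}(B_i,B_j))\in S$, and $G_A^+(S)$ is its transitive closure. The operator $T$ on subsets of $\mathrm{valid}(D)$ is $T(S)=S\ \cup\ \{u\in\mathrm{valid}(D)\mid$ the element type $C$ of $u$ satisfies $B\le_D C$ for some $A,B$ with $Rg(A)=B^*$ and $(A,\mathsf{insert}(B)),(A,\mathsf{delete}(B))\in S\}$ $\cup\ \{u\in\mathrm{valid}(D)\mid$ the element type $C$ of $u$ satisfies $B_i\le_D C$ for some $A$ with $Rg(A)=B_1+\dots+B_n$ and $(B_i,B_i)\in G_A^+(S)\}$ $\cup\ \{(A,\mathsf{replace}(B_i,B_k))\mid Rg(A)=B_1+\dots+B_n,\ i\neq k,\ (B_i,B_k)\in G_A^+(S)\}$. *)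

From Stdlib Require Import List Relations Permutation String Arith.
Import ListNotations.

(* Labels: the infinite set L is taken to be nat; str is represented
   separately (None in [option nat]).  Node identifiers are nat.
   String values are Stdlib strings. *)
Definition label := nat.
Definition nodeid := nat.

Inductive regexp : Type :=
| RStr : regexp
| REps : regexp
| RConc : list label -> regexp
| RDisj : list label -> regexp
| RStar : label -> regexp.

Record dtd : Type := mkDTD {
  ele : list label;
  rg : label -> regexp;               (* only meaningful on Ele *)
  rt : label }.

Definition subtypes (r : regexp) : list label :=
  match r with
  | RStr | REps => []
  | RConc bs | RDisj bs => bs
  | RStar b => [b]
  end.

Definition subel (D : dtd) (A B : label) : Prop :=
  In A (ele D) /\ In B (subtypes (rg D A)).

Definition leD (D : dtd) : label -> label -> Prop :=
  clos_refl_trans label (subel D).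

Definition wf_dtd (D : dtd) : Prop :=
  In (rt D) (ele D) /\
  (forall A, In A (ele D) ->
     (forall B, In B (subtypes (rg D A)) -> In B (ele D)) /\
     (match rg D A with
      | RConc bs => NoDup bs
      | RDisj bs => NoDup bs /\ bs <> []
      | _ => True end)) /\
  (* non-recursive: the subelement graph is acyclic *)
  (forall A, ~ clos_trans label (subel D) A A) /\
  (forall A, In A (ele D) -> leD D (rt D) A).

(* A node is either an element node (id, label, children) or a
   str-labelled leaf (id, string value).  The children list is
   unordered: order is irrelevant up to isomorphism [iso]. *)
Inductive tree : Type :=
| Elt : nodeid -> label -> list tree -> tree
| Str : nodeid -> string -> tree.

Definition tid (t : tree) : nodeid :=
  match t with Elt n _ _ => n | Str n _ => n end.

Definition tlab (t : tree) : option label :=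
  match t with Elt _ A _ => Some A | Str _ _ => None end.

Fixpoint ids (t : tree) : list nodeid :=
  match t with
  | Str n _ => [n]
  | Elt n _ ch => n :: flat_map ids ch
  end.

(* a tree is well formed when its node identifiers are pairwise distinct
   (so that ids t is the node set N_t) *)
Definition wf_tree (t : tree) : Prop := NoDup (ids t).

Inductive subtree : tree -> tree -> Prop :=
| st_refl : forall t, subtree t t
| st_child : forall s n A ch c, In c ch -> subtree s c -> subtree s (Elt n A ch).

Definition node_lab (t : tree) (n : nodeid) (l : option label) : Prop :=
  exists s, subtree s t /\ tid s = n /\ tlab s = l.

Definition parent_lab (t : tree) (n : nodeid) (A : label) : Prop :=
  exists p ch c, subtree (Elt p A ch) t /\ In c ch /\ tid c = n.

Definition lang (r : regexp) (w : list (option label)) : Prop :=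
  match r with
  | RStr => w = [None]
  | REps => w = []
  | RConc bs => Permutation w (map Some bs)
  | RDisj bs => exists B, In B bs /\ w = [Some B]
  | RStar B => Forall (fun x => x = Some B) w
  end.

Inductive conf (D : dtd) : tree -> Prop :=
| conf_str : forall n s, conf D (Str n s)
| conf_elt : forall n A ch,
    In A (ele D) -> lang (rg D A) (map tlab ch) -> Forall (conf D) ch ->
    conf D (Elt n A ch).

Definition ID (D : dtd) (A : label) (t : tree) : Prop :=
  wf_tree t /\ tlab t = Some A /\ conf D t.

Definition IDroot (D : dtd) (t : tree) : Prop := ID D (rt D) t.

Inductive iso : tree -> tree -> Prop :=
| iso_str : forall n m s, iso (Str n s) (Str m s)
| iso_elt : forall n m A ch1 ch2 ch2',
    Permutation ch2 ch2' -> Forall2 iso ch1 ch2' ->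
    iso (Elt n A ch1) (Elt m A ch2).

Inductive op : Type :=
| OIns : nodeid -> tree -> op
| ODel : nodeid -> op
| ORepT : nodeid -> tree -> op
| ORepS : nodeid -> string -> op.

Fixpoint do_ins (n : nodeid) (t' : tree) (t : tree) : tree :=
  match t with
  | Str m s => Str m s
  | Elt m A ch =>
      if Nat.eqb m n then Elt m A (map (do_ins n t') ch ++ [t'])
      else Elt m A (map (do_ins n t') ch)
  end.

Fixpoint do_del (n : nodeid) (t : tree) : tree :=
  match t with
  | Str m s => Str m s
  | Elt m A ch =>
      Elt m A (flat_map (fun c => if Nat.eqb (tid c) n then [] else [do_del n c]) ch)
  end.

Fixpoint do_rep (n : nodeid) (t' : tree) (t : tree) : tree :=
  match t with
  | Str m s => Str m s
  | Elt m A ch =>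
      Elt m A (map (fun c => if Nat.eqb (tid c) n then t' else do_rep n t' c) ch)
  end.

Fixpoint do_reps (n : nodeid) (s : string) (t : tree) : tree :=
  match t with
  | Str m s0 => if Nat.eqb m n then Str m s else Str m s0
  | Elt m A ch => Elt m A (map (do_reps n s) ch)
  end.

(* [[op]](t).  Deleting/replacing the root is never a matching update
   (matching requires a parent), so its value there is irrelevant. *)
Definition apply (o : op) (t : tree) : tree :=
  match o with
  | OIns n t' => do_ins n t' t
  | ODel n => do_del n t
  | ORepT n t' => do_rep n t' t
  | ORepS n s => do_reps n s t
  end.

Definition disjoint (l1 l2 : list nodeid) : Prop :=
  forall x, In x l1 -> ~ In x l2.

Definition valid_op (o : op) (t : tree) : Prop :=
  match o with
  | OIns n t' | ORepT n t' => In n (ids t) /\ disjoint (ids t') (ids t)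
  | ODel n | ORepS n _ => In n (ids t)
  end.

Definition apply_seq (os : list op) (t : tree) : tree :=
  fold_left (fun t o => apply o t) os t.

Inductive uat : Type :=
| UIns : label -> label -> uat
| UDel : label -> label -> uat
| URep : label -> label -> label -> uat
| URepS : label -> uat.

Definition uat_elt (u : uat) : label :=
  match u with
  | UIns A _ | UDel A _ | URep A _ _ | URepS A => A
  end.

Definition valid_uat (D : dtd) (u : uat) : Prop :=
  match u with
  | UIns A B | UDel A B => In A (ele D) /\ rg D A = RStar B
  | URep A B B' => In A (ele D) /\ B <> B' /\
      exists bs, rg D A = RDisj bs /\ In B bs /\ In B' bs
  | URepS A => In A (ele D) /\ rg D A = RStr
  end.

Definition matches (D : dtd) (t : tree) (o : op) (u : uat) : Prop :=
  match o, u with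
  | OIns n t', UIns A B => node_lab t n (Some A) /\ ID D B t'
  | ODel n, UDel A B => node_lab t n (Some B) /\ parent_lab t n A
  | ORepT n t', URep A B B' =>
      node_lab t n (Some B) /\ parent_lab t n A /\ ID D B' t' /\ B <> B'
  | ORepS n _, URepS A => node_lab t n None /\ parent_lab t n A
  | _, _ => False
  end.

Definition uset := uat -> Prop.

Definition in_sem (D : dtd) (S : uset) (t : tree) (o : op) : Prop :=
  exists u, S u /\ matches D t o u.

Fixpoint allowed (D : dtd) (S : uset) (t : tree) (os : list op) : Prop :=
  match os with
  | [] => True
  | o :: os' => valid_op o t /\ in_sem D S t o /\ allowed D S (apply o t) os'
  end.

Record policy : Type := mkPolicy { pA : uset; pF : uset }.

Definition is_policy (D : dtd) (P : policy) : Prop :=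
  (forall u, pA P u -> valid_uat D u) /\
  (forall u, pF P u -> valid_uat D u) /\
  (forall u, pA P u -> pF P u -> False).

Definition total (D : dtd) (P : policy) : Prop :=
  forall u, valid_uat D u -> pA P u \/ pF P u.

Definition consistent (D : dtd) (P : policy) : Prop :=
  ~ exists t os o0,
      IDroot D t /\ os <> [] /\ allowed D (pA P) t os /\
      in_sem D (pF P) t o0 /\ valid_op o0 t /\ ~ iso (apply o0 t) t /\
      iso (apply_seq os t) (apply o0 t).

Definition extends (P Q : policy) : Prop :=
  (forall u, pA P u -> pA Q u) /\ (forall u, pF P u -> pF Q u).

Definition quasiconsistent (D : dtd) (P : policy) : Prop :=
  exists Q, is_policy D Q /\ total D Q /\ extends P Q /\ consistent D Q.

Definition GA (D : dtd) (S : uset) (A : label) (Bi Bj : label) : Prop :=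
  exists bs, In A (ele D) /\ rg D A = RDisj bs /\ In Bi bs /\ In Bj bs /\
             S (URep A Bi Bj).

Definition GAplus (D : dtd) (S : uset) (A : label) : label -> label -> Prop :=
  clos_trans label (GA D S A).

Definition Top (D : dtd) (S : uset) : uset := fun u =>
  S u \/
  (valid_uat D u /\ exists A B, In A (ele D) /\ rg D A = RStar B /\
      S (UIns A B) /\ S (UDel A B) /\ leD D B (uat_elt u)) \/
  (valid_uat D u /\ exists A bs Bi, In A (ele D) /\ rg D A = RDisj bs /\
      In Bi bs /\ GAplus D S A Bi Bi /\ leD D Bi (uat_elt u)) \/
  (exists A bs Bi Bk, In A (ele D) /\ rg D A = RDisj bs /\ In Bi bs /\
      In Bk bs /\ Bi <> Bk /\ GAplus D S A Bi Bk /\ u = URep A Bi Bk).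

(* The heart of the proof is a counting invariant.  For a label X and a key
   k (a child label or a string value) let [edge_count X k t] be the number
   of X-labelled nodes' children with key k.  Every atomic update matching a
   UAT u changes these counts by the explicit amount [gain u - loss u] at
   the element type of u, and leaves them unchanged at every X that is not
   a descendant type of the children touched by u.  Counts are invariant
   under isomorphism.

   Soundness (T(A) disjoint from F implies consistency): if an allowed
   sequence emulates a non-trivial forbidden update u0 at type C, the counts
   along the sequence telescope.  Taking a minimal touched child type above
   C forces a balanced flow of A-updates at some ancestor type, which yields
   either an insert/delete pair or a replace cycle, i.e. u0 in T(A); if no
   such child type exists, the balance at C itself puts u0 in T(A).

   Completeness (consistency implies T(A) disjoint from F): for each clause
   of T we build a conforming document in which u0 applies and a non-empty
   allowed sequence with an isomorphic result.

   Finally the policy allowing exactly the valid UATs of T(A) and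
   forbidding the other valid ones is a consistent total extension, because
   T is idempotent on valid UATs; this gives quasiconsistency. *)

From Stdlib Require Import List Relations Permutation String Arith Lia Classical ClassicalEpsilon.
Import ListNotations.

Lemma rt_cases {T} (R : T -> T -> Prop) x y :
  clos_refl_trans T R x y -> x = y \/ clos_trans T R x y.
Proof.
  induction 1; auto. right; apply t_step; auto.
  destruct IHclos_refl_trans1, IHclos_refl_trans2; subst; auto. right; eapply t_trans; eauto.
Qed.

Lemma rt_t {T} (R : T -> T -> Prop) x y z :
  clos_refl_trans T R x y -> R y z -> clos_trans T R x z.
Proof. intros. eapply clos_rt_t; eauto. apply t_step; auto. Qed.

Lemma t_rt {T} (R : T -> T -> Prop) x y z :
  R x y -> clos_refl_trans T R y z -> clos_trans T R x z.
Proof.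
  intros H1 H2. destruct (rt_cases _ _ _ H2); subst.
  - apply t_step; auto.
  - eapply t_trans; eauto. apply t_step; auto.
Qed.

Lemma rt_mono {T} (R1 R2 : T -> T -> Prop) x y : (forall a b, R1 a b -> R2 a b) ->
  clos_refl_trans T R1 x y -> clos_refl_trans T R2 x y.
Proof. intros H. induction 1. apply rt_step; auto. apply rt_refl. eapply rt_trans; eauto. Qed.

Lemma minimal_exists {T} (Q : T -> Prop) (R : T -> T -> Prop) (l : list T) :
  (forall x, ~ R x x) -> (forall x y z, R x y -> R y z -> R x z) ->
  (exists x, In x l /\ Q x) -> exists m, In m l /\ Q m /\ forall y, In y l -> Q y -> ~ R y m.
Proof.
  intros Hirr Htr. induction l as [|a l IH]; intros [x [Hx Hq]]; [destruct Hx|].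
  destruct (classic (exists x, In x l /\ Q x)) as [Ex|NEx].
  - destruct (IH Ex) as [m [Hm [Qm Hmin]]].
    destruct (classic (Q a /\ R a m)) as [[Qa Ram]|Nam].
    + exists a. split; [left; auto|split; auto]. intros y [Ey|Hy] Qy Hya.
      * subst y. apply (Hirr a); auto.
      * apply (Hmin y Hy Qy). eapply Htr; eauto.
    + exists m. split; [right; auto|split; auto]. intros y [Ey|Hy] Qy Hya.
      * subst y. apply Nam; auto.
      * eapply Hmin; eauto.
  - destruct Hx as [Ex|Hx]; [|exfalso; apply NEx; eauto]. subst x.
    exists a. split; [left; auto|split; auto]. intros y [Ey|Hy] Qy Hya.
    + subst y. apply (Hirr a); auto.
    + apply NEx; eauto.
Qed.

(* A finite list of edges (a, b) is a flow; it is balanced when its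
   multisets of sources and targets coincide.  Balanced replacement flows
   arise from traces whose counts telescope to zero. *)
Definition edge_in (L : list (label * label)) (a b : label) : Prop := In (a, b) L.

Lemma sum_sources_le (g : label -> nat) (L : list (label * label)) :
  (forall e, In e L -> g (fst e) <= g (snd e)) ->
  list_sum (map g (map fst L)) <= list_sum (map g (map snd L)).
Proof.
  induction L; simpl; intros H; auto. specialize (IHL (fun e He => H e (or_intror He))).
  specialize (H a (or_introl eq_refl)). lia.
Qed.

(* If adding a source x and a target y makes the flow balanced, then y is
   reachable from x: otherwise the indicator of the set reachable from x
   would count strictly more targets than sources. *)
Lemma balanced_reach (L : list (label * label)) x y :
  Permutation (x :: map snd L) (y :: map fst L) -> clos_refl_trans label (edge_in L) x y.
Proof.
  intros HP. apply NNPP. intros NR.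
  set (f := fun v => if excluded_middle_informative (clos_refl_trans label (edge_in L) x v) then 1 else 0).
  pose proof (Permutation_list_sum (Permutation_map f HP)) as E. simpl in E.
  assert (fx : f x = 1).
  { unfold f. destruct (excluded_middle_informative _); auto. exfalso; apply n; apply rt_refl. }
  assert (fy : f y = 0). { unfold f. destruct (excluded_middle_informative _); auto. contradiction. }
  assert (Hle : list_sum (map f (map fst L)) <= list_sum (map f (map snd L))).
  { apply sum_sources_le. intros [a b] He. unfold f; simpl.
    destruct (excluded_middle_informative (clos_refl_trans _ _ x a)); [|lia].
    destruct (excluded_middle_informative (clos_refl_trans _ _ x b)); [lia|].
    exfalso. apply n. eapply rt_trans; eauto. apply rt_step. exact He. }
  lia.
Qed.

Lemma balanced_cycle (L : list (label * label)) a b :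
  Permutation (map fst L) (map snd L) -> In (a, b) L -> clos_refl_trans label (edge_in L) b a.
Proof.
  intros HP Hin. apply in_split in Hin. destruct Hin as [L1 [L2 ->]].
  rewrite !map_app in HP. simpl in HP.
  assert (HP' : Permutation (b :: map snd (L1 ++ L2)) (a :: map fst (L1 ++ L2))).
  { rewrite !map_app. eapply perm_trans. apply Permutation_middle.
    eapply perm_trans. apply Permutation_sym. exact HP. apply Permutation_sym. apply Permutation_middle. }
  apply balanced_reach in HP'. eapply rt_mono; [|exact HP']. unfold edge_in. intros x y H.
  apply in_app_or in H. apply in_or_app. destruct H; auto. right; right; auto.
Qed.

Fixpoint tree_ind_nested (P : tree -> Prop) (Hs : forall n s, P (Str n s))
  (He : forall n A ch, Forall P ch -> P (Elt n A ch)) (t : tree) : P t :=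
  match t with
  | Str n s => Hs n s
  | Elt n A ch => He n A ch ((fix F (l : list tree) : Forall P l :=
       match l with [] => Forall_nil _ | c :: l' => Forall_cons c (tree_ind_nested P Hs He c) (F l') end) ch)
  end.

Inductive ctx : Type :=
| Hole : ctx
| Frame : nodeid -> label -> list tree -> ctx -> list tree -> ctx.

Fixpoint plug (K : ctx) (s : tree) : tree :=
  match K with Hole => s | Frame n A l k r => Elt n A (l ++ plug k s :: r) end.

Fixpoint ctx_ids (K : ctx) : list nodeid :=
  match K with Hole => [] | Frame n A l k r => n :: flat_map ids l ++ flat_map ids r ++ ctx_ids k end.

Lemma ids_plug K s : Permutation (ids (plug K s)) (ctx_ids K ++ ids s).
Proof.
  induction K; simpl; auto.
  apply perm_skip. rewrite flat_map_app. simpl.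
  rewrite <- !app_assoc.
  apply Permutation_app_head.
  eapply perm_trans. apply Permutation_app_comm.
  apply Permutation_app_head. exact IHK.
Qed.

Lemma tid_in_ids t : In (tid t) (ids t).
Proof. destruct t; simpl; auto. Qed.

Lemma in_flat_map_ids x c l : In c l -> In x (ids c) -> In x (flat_map ids l).
Proof. intros. apply in_flat_map. eauto. Qed.

Lemma subtree_ids s t : subtree s t -> forall x, In x (ids s) -> In x (ids t).
Proof. induction 1; simpl; intros; auto. right. eapply in_flat_map_ids; eauto. Qed.

Lemma subtree_plug s t : subtree s t -> exists K, t = plug K s.
Proof.
  induction 1. exists Hole; auto.
  destruct IHsubtree as [K HK]. apply in_split in H. destruct H as [l [r Hl]]. subst.
  exists (Frame n A l K r). reflexivity.
Qed.

Lemma plug_subtree K s : subtree s (plug K s).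
Proof.
  induction K; simpl. constructor. econstructor. apply in_or_app. right. left. reflexivity. auto.
Qed.

Lemma subtree_trans a b c : subtree a b -> subtree b c -> subtree a c.
Proof. intros H1 H2. revert a H1. induction H2; intros; auto. econstructor; eauto. Qed.

Lemma nodup_app_disj {T} (l1 l2 : list T) x : NoDup (l1 ++ l2) -> In x l1 -> In x l2 -> False.
Proof.
  induction l1; simpl; intros. auto. inversion H; subst. destruct H0; subst; eauto.
  apply H4. apply in_or_app; auto.
Qed.

Lemma nodup_flat_same x c1 c2 l : NoDup (flat_map ids l) -> In c1 l -> In c2 l ->
  In x (ids c1) -> In x (ids c2) -> c1 = c2.
Proof.
  induction l; simpl; intros. contradiction.
  destruct H0, H1; subst; auto.
  - exfalso. eapply nodup_app_disj; eauto. eapply in_flat_map_ids; eauto.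
  - exfalso. eapply nodup_app_disj; eauto. eapply in_flat_map_ids; eauto.
  - eapply IHl; eauto. eapply NoDup_app_remove_l; eauto.
Qed.

Lemma subtree_unique t : NoDup (ids t) -> forall a b, subtree a t -> subtree b t -> tid a = tid b -> a = b.
Proof.
  induction t as [n s|n A ch IH] using tree_ind_nested; intros Hnd a b Ha Hb Heq.
  - inversion Ha; inversion Hb; subst; auto.
  - simpl in Hnd. inversion Hnd as [|? ? Hn Hnd2]; subst.
    inversion Ha as [|? ? ? ? c1 Hc1 Hs1]; subst; inversion Hb as [|? ? ? ? c2 Hc2 Hs2]; subst; auto.
    + exfalso. apply Hn. eapply in_flat_map_ids; eauto. eapply subtree_ids; eauto.
      simpl in Heq; rewrite Heq. apply tid_in_ids.
    + exfalso. apply Hn. eapply in_flat_map_ids; eauto. eapply subtree_ids; eauto.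
      simpl in Heq; rewrite <- Heq. apply tid_in_ids.
    + assert (c1 = c2). { eapply nodup_flat_same with (x := tid a); eauto.
        eapply subtree_ids; eauto. apply tid_in_ids. eapply subtree_ids; eauto. rewrite Heq. apply tid_in_ids. }
      subst. rewrite Forall_forall in IH. eapply IH; eauto.
      apply in_split in Hc1. destruct Hc1 as [l1 [l2 ->]]. rewrite flat_map_app in Hnd2. simpl in Hnd2.
      apply NoDup_app_remove_l in Hnd2. eapply NoDup_app_remove_r; eauto.
Qed.

Lemma notin_flat_cons n c l : ~ In n (flat_map ids (c :: l)) -> ~ In n (ids c) /\ ~ In n (flat_map ids l).
Proof. simpl. intros H; split; intro; apply H; apply in_or_app; auto. Qed.

Lemma tid_neq n c : ~ In n (ids c) -> tid c <> n.
Proof. intros H E; apply H; rewrite <- E; apply tid_in_ids. Qed.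

Lemma ins_notin n t' t : ~ In n (ids t) -> do_ins n t' t = t.
Proof.
  induction t as [m s|m A ch IH] using tree_ind_nested; simpl; intros H; auto.
  destruct (Nat.eqb_spec m n). exfalso; auto.
  f_equal. assert (H2 : ~ In n (flat_map ids ch)) by auto. clear H n0.
  induction ch; simpl; auto. inversion IH as [|? ? Ha Hch]; subst. apply notin_flat_cons in H2 as [Hn1 Hn2].
  rewrite Ha, IHch; auto.
Qed.

Lemma ins_list_id n t' l : ~ In n (flat_map ids l) -> map (do_ins n t') l = l.
Proof. induction l; simpl; intros; auto. apply notin_flat_cons in H as [? ?]. rewrite ins_notin, IHl; auto. Qed.

Lemma del_notin n t : ~ In n (ids t) -> do_del n t = t.
Proof.
  induction t as [m s|m A ch IH] using tree_ind_nested; simpl; intros H; auto.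
  f_equal. assert (H2 : ~ In n (flat_map ids ch)) by auto. clear H.
  induction ch; simpl; auto. inversion IH as [|? ? Ha Hch]; subst. apply notin_flat_cons in H2 as [Hn1 Hn2].
  destruct (Nat.eqb_spec (tid a) n). exfalso; eapply tid_neq; eauto.
  rewrite Ha, IHch; auto.
Qed.

Lemma del_list_id n l : ~ In n (flat_map ids l) ->
  flat_map (fun c => if Nat.eqb (tid c) n then [] else [do_del n c]) l = l.
Proof.
  induction l; simpl; intros; auto. apply notin_flat_cons in H as [? ?].
  destruct (Nat.eqb_spec (tid a) n). exfalso; eapply tid_neq; eauto.
  rewrite del_notin, IHl; auto.
Qed.

Lemma rep_notin n t' t : ~ In n (ids t) -> do_rep n t' t = t.
Proof.
  induction t as [m s|m A ch IH] using tree_ind_nested; simpl; intros H; auto.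
  f_equal. assert (H2 : ~ In n (flat_map ids ch)) by auto. clear H.
  induction ch; simpl; auto. inversion IH as [|? ? Ha Hch]; subst. apply notin_flat_cons in H2 as [Hn1 Hn2].
  destruct (Nat.eqb_spec (tid a) n). exfalso; eapply tid_neq; eauto.
  rewrite Ha, IHch; auto.
Qed.

Lemma rep_list_id n t' l : ~ In n (flat_map ids l) ->
  map (fun c => if Nat.eqb (tid c) n then t' else do_rep n t' c) l = l.
Proof.
  induction l; simpl; intros; auto. apply notin_flat_cons in H as [? ?].
  destruct (Nat.eqb_spec (tid a) n). exfalso; eapply tid_neq; eauto.
  rewrite rep_notin, IHl; auto.
Qed.

Lemma reps_notin n s t : ~ In n (ids t) -> do_reps n s t = t.
Proof.
  induction t as [m s0|m A ch IH] using tree_ind_nested; simpl; intros H.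
  destruct (Nat.eqb_spec m n); auto. exfalso; auto.
  f_equal. assert (H2 : ~ In n (flat_map ids ch)) by auto. clear H.
  induction ch; simpl; auto. inversion IH as [|? ? Ha Hch]; subst. apply notin_flat_cons in H2 as [Hn1 Hn2].
  rewrite Ha, IHch; auto.
Qed.

Lemma reps_list_id n s l : ~ In n (flat_map ids l) -> map (do_reps n s) l = l.
Proof. induction l; simpl; intros; auto. apply notin_flat_cons in H as [? ?]. rewrite reps_notin, IHl; auto. Qed.

Lemma notin_flat_app n l r : ~ In n (flat_map ids l ++ flat_map ids r) -> ~ In n (flat_map ids l) /\ ~ In n (flat_map ids r).
Proof. intros H; split; intro; apply H; apply in_or_app; auto. Qed.

Lemma tid_plug k s : tid (plug k s) = tid s \/ In (tid (plug k s)) (ctx_ids k).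
Proof. destruct k; simpl; auto. Qed.

Lemma ins_plug n t' K s : ~ In n (ctx_ids K) -> do_ins n t' (plug K s) = plug K (do_ins n t' s).
Proof.
  induction K as [|m B l K IHK r]; simpl; intros H; auto.
  destruct (Nat.eqb_spec m n). exfalso; auto.
  assert (~ In n (flat_map ids l ++ flat_map ids r)) by (intro Hx; apply H; right; rewrite app_assoc; apply in_or_app; left; exact Hx).
  apply notin_flat_app in H0 as [? ?].
  rewrite map_app. simpl. rewrite !ins_list_id, IHK; auto.
  intro; apply H; right; apply in_or_app; right; apply in_or_app; auto.
Qed.

Lemma del_plug n K s : ~ In n (ctx_ids K) -> tid s <> n -> do_del n (plug K s) = plug K (do_del n s).
Proof.
  induction K as [|m B l K IHK r]; simpl; intros H Hs; auto.
  assert (~ In n (flat_map ids l ++ flat_map ids r)) by (intro Hx; apply H; right; rewrite app_assoc; apply in_or_app; left; exact Hx).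
  apply notin_flat_app in H0 as [? ?].
  assert (~ In n (ctx_ids K)) by (intro; apply H; right; apply in_or_app; right; apply in_or_app; auto).
  rewrite flat_map_app. simpl. rewrite !del_list_id, IHK; auto.
  destruct (Nat.eqb_spec (tid (plug K s)) n); auto.
  exfalso. destruct (tid_plug K s) as [E|E]; rewrite e in E; auto.
Qed.

Lemma rep_plug n t' K s : ~ In n (ctx_ids K) -> tid s <> n -> do_rep n t' (plug K s) = plug K (do_rep n t' s).
Proof.
  induction K as [|m B l K IHK r]; simpl; intros H Hs; auto.
  assert (~ In n (flat_map ids l ++ flat_map ids r)) by (intro Hx; apply H; right; rewrite app_assoc; apply in_or_app; left; exact Hx).
  apply notin_flat_app in H0 as [? ?].
  assert (~ In n (ctx_ids K)) by (intro; apply H; right; apply in_or_app; right; apply in_or_app; auto).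
  rewrite map_app. simpl. rewrite !rep_list_id, IHK; auto.
  destruct (Nat.eqb_spec (tid (plug K s)) n); auto.
  exfalso. destruct (tid_plug K s) as [E|E]; rewrite e in E; auto.
Qed.

Lemma reps_plug n s0 K s : ~ In n (ctx_ids K) -> do_reps n s0 (plug K s) = plug K (do_reps n s0 s).
Proof.
  induction K as [|m B l K IHK r]; simpl; intros H; auto.
  assert (~ In n (flat_map ids l ++ flat_map ids r)) by (intro Hx; apply H; right; rewrite app_assoc; apply in_or_app; left; exact Hx).
  apply notin_flat_app in H0 as [? ?].
  rewrite map_app. simpl. rewrite !reps_list_id, IHK; auto.
  intro; apply H; right; apply in_or_app; right; apply in_or_app; auto.
Qed.

Lemma del_local n p A l c r : ~ In n (flat_map ids l) -> ~ In n (flat_map ids r) -> tid c = n ->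
  do_del n (Elt p A (l ++ c :: r)) = Elt p A (l ++ r).
Proof.
  intros. simpl. rewrite flat_map_app. simpl. rewrite H1, Nat.eqb_refl, !del_list_id; auto.
Qed.

Lemma rep_local n t' p A l c r : ~ In n (flat_map ids l) -> ~ In n (flat_map ids r) -> tid c = n ->
  do_rep n t' (Elt p A (l ++ c :: r)) = Elt p A (l ++ t' :: r).
Proof.
  intros. simpl. rewrite map_app. simpl. rewrite H1, Nat.eqb_refl, !rep_list_id; auto.
Qed.

Lemma ins_local n t' A ch : ~ In n (flat_map ids ch) -> do_ins n t' (Elt n A ch) = Elt n A (ch ++ [t']).
Proof. intros. simpl. rewrite Nat.eqb_refl, ins_list_id; auto. Qed.

Lemma reps_local n s s0 p A l r : ~ In n (flat_map ids l) -> ~ In n (flat_map ids r) ->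
  do_reps n s (Elt p A (l ++ Str n s0 :: r)) = Elt p A (l ++ Str n s :: r).
Proof. intros. simpl. rewrite map_app. simpl. rewrite Nat.eqb_refl, !reps_list_id; auto. Qed.

Definition node_key (t : tree) : label + string :=
  match t with Elt _ A _ => inl A | Str _ s => inr s end.

Definition node_key_eq_dec : forall a b : label + string, {a = b} + {a <> b}.
Proof. decide equality. apply Nat.eq_dec. apply string_dec. Defined.

Fixpoint edge_count (X : label) (k : label + string) (t : tree) : nat :=
  match t with
  | Str _ _ => 0
  | Elt _ A ch => (if Nat.eqb A X then count_occ node_key_eq_dec (map node_key ch) k else 0)
                  + list_sum (map (edge_count X k) ch)
  end.

Definition key_eqb (a b : label + string) : bool := if node_key_eq_dec a b then true else false.

Lemma node_key_plug K s1 s2 : node_key s1 = node_key s2 -> node_key (plug K s1) = node_key (plug K s2).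
Proof. destruct K; simpl; auto. Qed.

Lemma tlab_plug K s1 s2 : tlab s1 = tlab s2 -> tlab (plug K s1) = tlab (plug K s2).
Proof. destruct K; simpl; auto. Qed.

(* Replacing the filling of a context changes the counts by the difference
   of the counts of the fillings (the parent edge is unchanged since the
   keys agree). *)
Lemma edge_count_plug K s1 s2 X k : node_key s1 = node_key s2 ->
  edge_count X k (plug K s1) + edge_count X k s2 = edge_count X k (plug K s2) + edge_count X k s1.
Proof.
  intros Hk. induction K as [|m B l K IHK r]; simpl. lia.
  rewrite !map_app, !list_sum_app, !count_occ_app. simpl.
  rewrite (node_key_plug K s1 s2 Hk). lia.
Qed.

Lemma edge_count_child p A l c r X k : edge_count X k (Elt p A (l ++ c :: r)) =
  edge_count X k (Elt p A (l ++ r)) + Nat.b2n (Nat.eqb A X && key_eqb (node_key c) k) + edge_count X k c.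
Proof.
  simpl. rewrite !map_app, !list_sum_app, !count_occ_app. simpl. unfold Nat.b2n, key_eqb.
  destruct (Nat.eqb A X); destruct (node_key_eq_dec (node_key c) k); simpl; lia.
Qed.

Definition gain (u : uat) (X : label) (k : label + string) : nat :=
  match u with
  | UIns A B => Nat.b2n (Nat.eqb A X && key_eqb (inl B) k)
  | URep A _ B' => Nat.b2n (Nat.eqb A X && key_eqb (inl B') k)
  | _ => 0 end.

Definition loss (u : uat) (X : label) (k : label + string) : nat :=
  match u with
  | UDel A B => Nat.b2n (Nat.eqb A X && key_eqb (inl B) k)
  | URep A B _ => Nat.b2n (Nat.eqb A X && key_eqb (inl B) k)
  | _ => 0 end.

Definition child_types (u : uat) : list label :=
  match u with UIns _ B | UDel _ B => [B] | URep _ B B' => [B; B'] | URepS _ => [] end.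

Lemma lang_sub r ch c W : lang r (map tlab ch) -> In c ch -> tlab c = Some W -> In W (subtypes r).
Proof.
  intros Hl Hc Ht. assert (Hm : In (Some W) (map tlab ch)) by (rewrite <- Ht; apply in_map; auto).
  destruct r; simpl in *.
  - rewrite Hl in Hm. destruct Hm as [H|H]; inversion H.
  - rewrite Hl in Hm. inversion Hm.
  - apply (Permutation_in _ Hl) in Hm. apply in_map_iff in Hm. destruct Hm as [x [E H]]. inversion E; subst; auto.
  - destruct Hl as [B [HB E]]. rewrite E in Hm. destruct Hm as [H|H]; inversion H; subst; auto.
  - rewrite Forall_forall in Hl. apply Hl in Hm. inversion Hm; auto.
Qed.

Lemma conf_subtree D s t : subtree s t -> conf D t -> conf D s.
Proof.
  induction 1; intros; auto. inversion H1; subst. rewrite Forall_forall in H7. auto.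
Qed.

Lemma edge_count_unrelated D X k c : conf D c -> (forall W, tlab c = Some W -> ~ leD D W X) -> edge_count X k c = 0.
Proof.
  induction c as [m s|m W ch IH] using tree_ind_nested; simpl; intros Hc Hn; auto.
  inversion Hc; subst.
  destruct (Nat.eqb_spec W X). { exfalso. apply (Hn W); auto. subst; apply rt_refl. }
  simpl. clear n.
  assert (forall c, In c ch -> edge_count X k c = 0).
  { intros c Hin. rewrite Forall_forall in IH, H4. apply IH; auto. intros W' E HW'.
    apply (Hn W); auto. eapply rt_trans; [|exact HW']. apply rt_step. split; auto.
    eapply lang_sub; eauto. }
  clear - H. induction ch; simpl; auto. rewrite (H a), IHch; simpl; auto. intros; apply H; simpl; auto.
Qed.

Lemma conf_plug D K s s' : conf D (plug K s) -> conf D s' -> tlab s = tlab s' -> conf D (plug K s').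
Proof.
  induction K as [|m B l K IHK r]; simpl; intros H1 H2 H3; auto.
  inversion H1 as [|? ? ? Hin Hlang Hfor]; subst. constructor; auto.
  - rewrite map_app in *. simpl in *. rewrite <- (tlab_plug K s s' H3). auto.
  - apply Forall_app in Hfor as [Hl Hr]. inversion Hr; subst. apply Forall_app; split; auto.
Qed.

Lemma conf_plug_in D K s : conf D (plug K s) -> conf D s.
Proof. intros. eapply conf_subtree; eauto. apply plug_subtree. Qed.

Lemma decomp_node t n l : node_lab t n l -> exists K s, t = plug K s /\ tid s = n /\ tlab s = l.
Proof. intros [s [Hs [Hi Hl]]]. apply subtree_plug in Hs. destruct Hs as [K HK]. eauto. Qed.

Lemma decomp_par t n l A : NoDup (ids t) -> node_lab t n l -> parent_lab t n A ->
  exists K p L c R, t = plug K (Elt p A (L ++ c :: R)) /\ tid c = n /\ tlab c = l.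
Proof.
  intros Hnd [s [Hs [Hi Hl]]] [p [ch [c [Hp [Hc Hci]]]]].
  assert (c = s). { eapply subtree_unique; eauto. eapply subtree_trans; [|exact Hp]. econstructor; eauto. constructor. congruence. }
  subst. apply subtree_plug in Hp. destruct Hp as [K HK]. apply in_split in Hc. destruct Hc as [L [R ->]].
  exists K, p, L, s, R. auto.
Qed.

Lemma child_id_unique K p A L c R : NoDup (ids (plug K (Elt p A (L ++ c :: R)))) ->
  ~ In (tid c) (ctx_ids K) /\ tid c <> p /\ ~ In (tid c) (flat_map ids L) /\ ~ In (tid c) (flat_map ids R).
Proof.
  intros H. apply (Permutation_NoDup (ids_plug _ _)) in H. simpl in H. rewrite flat_map_app in H. simpl in H.
  assert (Hc : In (tid c) (ids c)) by apply tid_in_ids.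
  repeat split.
  - intro. eapply nodup_app_disj; eauto. right. apply in_or_app; right; apply in_or_app; left; auto.
  - intros E. apply NoDup_app_remove_l in H. inversion H as [|? ? Hn1 Hn2]; subst. apply Hn1. apply in_or_app; right; apply in_or_app; auto.
  - intro. apply NoDup_app_remove_l in H. inversion H; subst. eapply nodup_app_disj; eauto; apply in_or_app; auto.
  - intro. apply NoDup_app_remove_l in H. inversion H as [|? ? Hn1 Hn2]; subst. apply NoDup_app_remove_l in Hn2.
    eapply nodup_app_disj; eauto; apply in_or_app; auto.
Qed.

Lemma node_id_unique K n A ch : NoDup (ids (plug K (Elt n A ch))) -> ~ In n (ctx_ids K) /\ ~ In n (flat_map ids ch).
Proof.
  intros H. apply (Permutation_NoDup (ids_plug _ _)) in H. simpl in H. split.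
  - intro. eapply nodup_app_disj; eauto. left; auto.
  - apply NoDup_app_remove_l in H. inversion H; auto.
Qed.

Lemma NoDup_remove_mid {T} (a b c : list T) : NoDup (a ++ b ++ c) -> NoDup (a ++ c).
Proof.
  intros H. apply (Permutation_NoDup (Permutation_app_swap_app _ _ _)) in H.
  apply NoDup_app_remove_l in H. auto.
Qed.

Lemma NoDup_insert_mid {T} (a b c : list T) : NoDup (a ++ c) -> NoDup b ->
  (forall x, In x b -> In x (a ++ c) -> False) -> NoDup (a ++ b ++ c).
Proof.
  intros H1 H2 H3. apply (Permutation_NoDup (Permutation_app_swap_app _ _ _)).
  apply NoDup_app; auto.
Qed.

Lemma in_plug_ctx x K s : In x (ctx_ids K) -> In x (ids (plug K s)).
Proof. intros. apply (Permutation_in _ (Permutation_sym (ids_plug K s))). apply in_or_app; auto. Qed.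

Lemma in_plug_s x K s : In x (ids s) -> In x (ids (plug K s)).
Proof. intros. apply (Permutation_in _ (Permutation_sym (ids_plug K s))). apply in_or_app; auto. Qed.

Lemma nodup_plug_replace K s s' : NoDup (ids (plug K s)) -> NoDup (ids s') ->
  (forall x, In x (ids s') -> In x (ids s) \/ ~ In x (ids (plug K s))) -> NoDup (ids (plug K s')).
Proof.
  intros H1 H2 H3. apply (Permutation_NoDup (Permutation_sym (ids_plug K s'))).
  pose proof (Permutation_NoDup (ids_plug K s) H1) as H4.
  apply NoDup_app; auto. eapply NoDup_app_remove_r; eauto.
  intros x Hc Hs. destruct (H3 x Hs) as [H|H].
  - eapply nodup_app_disj; eauto.
  - apply H. apply in_plug_ctx; auto.
Qed.

Lemma ids_plug_eq K s1 s2 : ids s1 = ids s2 -> ids (plug K s1) = ids (plug K s2).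
Proof.
  induction K as [|m B l K IHK r]; simpl; intros; auto.
  rewrite !flat_map_app. simpl. rewrite IHK; auto.
Qed.

Lemma tlab_some_elt s A : tlab s = Some A -> exists n ch, s = Elt n A ch.
Proof. destruct s; simpl; intros H; inversion H; eauto. Qed.

Lemma tlab_none_str s : tlab s = None -> exists n v, s = Str n v.
Proof. destruct s; simpl; intros H; inversion H; eauto. Qed.

Lemma nodup_insert_child K n A ch t' : NoDup (ids (plug K (Elt n A ch))) -> NoDup (ids t') ->
  disjoint (ids t') (ids (plug K (Elt n A ch))) -> NoDup (ids (plug K (Elt n A (ch ++ [t'])))).
Proof.
  intros Hnd Hw Hdis. apply nodup_plug_replace with (s := Elt n A ch); auto.
  - simpl. rewrite flat_map_app. simpl. rewrite app_nil_r, app_comm_cons.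
    apply NoDup_app; auto.
    + eapply NoDup_app_remove_l. apply (Permutation_NoDup (ids_plug _ _)) in Hnd. exact Hnd.
    + intros x H1 H2. apply (Hdis x); auto. apply in_plug_s; auto.
  - intros x Hx. simpl in Hx. rewrite flat_map_app in Hx. simpl in Hx. rewrite app_nil_r in Hx.
    destruct Hx as [Hx|Hx]; [left; left; auto|].
    apply in_app_or in Hx. destruct Hx; [left; right; auto|right; apply Hdis; auto].
Qed.

Lemma nodup_delete_child K p A L c R : NoDup (ids (plug K (Elt p A (L ++ c :: R)))) ->
  NoDup (ids (plug K (Elt p A (L ++ R)))).
Proof.
  intros Hnd. apply nodup_plug_replace with (s := Elt p A (L ++ c :: R)); auto.
  - apply (Permutation_NoDup (ids_plug _ _)) in Hnd. apply NoDup_app_remove_l in Hnd.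
    simpl in *. rewrite flat_map_app in *. simpl in Hnd. rewrite app_comm_cons in Hnd |- *.
    eapply NoDup_remove_mid; eauto.
  - intros x Hx. left. simpl in *. rewrite !flat_map_app in *. simpl.
    destruct Hx as [Hx|Hx]; auto. right. apply in_app_or in Hx. apply in_or_app.
    destruct Hx; auto. right. apply in_or_app; auto.
Qed.

Lemma nodup_replace_child K p A L c R t' : NoDup (ids (plug K (Elt p A (L ++ c :: R)))) ->
  NoDup (ids t') -> disjoint (ids t') (ids (plug K (Elt p A (L ++ c :: R)))) ->
  NoDup (ids (plug K (Elt p A (L ++ t' :: R)))).
Proof.
  intros Hnd Hw Hdis. apply nodup_plug_replace with (s := Elt p A (L ++ c :: R)); auto.
  - apply (Permutation_NoDup (ids_plug _ _)) in Hnd. apply NoDup_app_remove_l in Hnd.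
    simpl in *. rewrite flat_map_app in *. simpl in *. rewrite app_comm_cons in Hnd |- *.
    apply NoDup_insert_mid; auto; [eapply NoDup_remove_mid; eauto|].
    intros x H1 H2. apply (Hdis x); auto. apply in_plug_s. simpl. rewrite flat_map_app. simpl.
    simpl in H2. destruct H2 as [H2|H2]; auto. right. apply in_app_or in H2. apply in_or_app.
    destruct H2; auto. right. apply in_or_app; auto.
  - intros x Hx. simpl in Hx. rewrite flat_map_app in Hx. simpl in Hx.
    destruct Hx as [Hx|Hx]; [left; left; auto|].
    apply in_app_or in Hx. destruct Hx as [Hx|Hx].
    + left; right; simpl; rewrite flat_map_app; apply in_or_app; auto.
    + apply in_app_or in Hx. destruct Hx as [Hx|Hx]; [right; apply Hdis; auto|].
      left; right; simpl; rewrite flat_map_app; apply in_or_app; right; simpl; apply in_or_app; auto.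
Qed.

(* u leaves the counts at X unchanged except for its own gain and loss:
   no child type touched by u lies below X, and u does not rewrite a string
   directly under an X node. *)
Definition unaffected (D : dtd) (X : label) (u : uat) : Prop :=
  (forall W, In W (child_types u) -> ~ leD D W X) /\ u <> URepS X.

Definition step_effect (D : dtd) (t t' : tree) (u : uat) : Prop :=
  NoDup (ids t') /\ conf D t' /\
  (forall X k, unaffected D X u ->
     edge_count X k t' + loss u X k = edge_count X k t + gain u X k).

Lemma step_ins D t n t' A B : NoDup (ids t) -> conf D t ->
  In n (ids t) -> disjoint (ids t') (ids t) ->
  node_lab t n (Some A) -> ID D B t' -> In A (ele D) -> rg D A = RStar B ->
  step_effect D t (do_ins n t' t) (UIns A B).
Proof.
  intros Hnd Hc Hin Hdis Hnl [Hw [Ht Hct]] HA Hrg.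
  destruct (decomp_node _ _ _ Hnl) as [K [s [-> [Hi Hl]]]].
  destruct (tlab_some_elt _ _ Hl) as [m [ch ->]]. simpl in Hi; subst m.
  destruct (node_id_unique _ _ _ _ Hnd) as [F1 F2].
  rewrite ins_plug, ins_local; auto.
  destruct (tlab_some_elt _ _ Ht) as [m' [ch' Et']].
  split; [|split].
  - apply nodup_insert_child; auto.
  - eapply conf_plug; eauto. pose proof (conf_plug_in _ _ _ Hc) as Hs.
    inversion Hs as [|? ? ? Hin' Hlang Hfor]; subst.
    constructor; auto.
    + rewrite Hrg in *. simpl in *. rewrite map_app. apply Forall_app; split; auto; simpl; repeat constructor.
    + apply Forall_app; split; auto.
  - intros X k [HW HR]. simpl gain. simpl loss.
    pose proof (edge_count_plug K (Elt n A (ch ++ [t'])) (Elt n A ch) X k eq_refl).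
    pose proof (edge_count_child n A ch t' [] X k). rewrite app_nil_r in H0.
    assert (edge_count X k t' = 0). { apply (edge_count_unrelated D); auto. intros W E. apply HW. rewrite Ht in E; inversion E; subst; simpl; auto. }
    rewrite Et' in *. simpl node_key in H0. lia.
Qed.

Lemma step_del D t n A B : NoDup (ids t) -> conf D t ->
  node_lab t n (Some B) -> parent_lab t n A -> In A (ele D) -> rg D A = RStar B ->
  step_effect D t (do_del n t) (UDel A B).
Proof.
  intros Hnd Hc Hnl Hpl HA Hrg.
  destruct (decomp_par _ _ _ _ Hnd Hnl Hpl) as [K [p [L [c [R [-> [Hi Hl]]]]]]].
  destruct (child_id_unique _ _ _ _ _ _ Hnd) as [F1 [F2 [F3 F4]]]. rewrite Hi in *.
  rewrite del_plug, del_local; auto.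
  pose proof (conf_plug_in _ _ _ Hc) as Hs.
  inversion Hs as [|? ? ? Hin' Hlang Hfor]; subst.
  split; [|split].
  - eapply nodup_delete_child; eauto.
  - eapply conf_plug; eauto. constructor; auto.
    + rewrite Hrg in *. simpl in *. rewrite map_app in *. apply Forall_app in Hlang as [? Hr].
      inversion Hr; subst. apply Forall_app; auto.
    + apply Forall_app in Hfor as [? Hr]. inversion Hr; subst. apply Forall_app; auto.
  - intros X k [HW HR]. simpl gain. simpl loss.
    pose proof (edge_count_plug K (Elt p A (L ++ R)) (Elt p A (L ++ c :: R)) X k eq_refl).
    pose proof (edge_count_child p A L c R X k).
    assert (edge_count X k c = 0). { apply (edge_count_unrelated D).
      apply Forall_app in Hfor as [? Hr]. inversion Hr; auto.
      intros W E. apply HW. rewrite Hl in E; inversion E; subst; simpl; auto. }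
    destruct (tlab_some_elt _ _ Hl) as [m' [ch' Ec]]. rewrite Ec in *. simpl node_key in H0. lia.
Qed.

Lemma step_rep D t n t' A B B' : NoDup (ids t) -> conf D t ->
  disjoint (ids t') (ids t) ->
  node_lab t n (Some B) -> parent_lab t n A -> ID D B' t' ->
  In A (ele D) -> (exists bs, rg D A = RDisj bs /\ In B bs /\ In B' bs) ->
  step_effect D t (do_rep n t' t) (URep A B B').
Proof.
  intros Hnd Hc Hdis Hnl Hpl [Hw [Ht Hct]] HA [bs [Hrg [HB HB']]].
  destruct (decomp_par _ _ _ _ Hnd Hnl Hpl) as [K [p [L [c [R [-> [Hi Hl]]]]]]].
  destruct (child_id_unique _ _ _ _ _ _ Hnd) as [F1 [F2 [F3 F4]]]. rewrite Hi in *.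
  rewrite rep_plug, rep_local; auto.
  pose proof (conf_plug_in _ _ _ Hc) as Hs.
  inversion Hs as [|? ? ? Hin' Hlang Hfor]; subst.
  split; [|split].
  - apply (nodup_replace_child K p A L c R t'); auto.
  - eapply conf_plug; eauto. constructor; auto.
    + rewrite Hrg in *. simpl in *. destruct Hlang as [B0 [_ E]].
      assert (L = [] /\ R = []) as [-> ->].
      { destruct L; simpl in E. destruct R; simpl in E; inversion E; auto. destruct L; inversion E. }
      simpl. exists B'. rewrite Ht. auto.
    + apply Forall_app in Hfor as [? Hr]. inversion Hr; subst. apply Forall_app; auto.
  - intros X k [HW HR]. simpl gain. simpl loss.
    pose proof (edge_count_plug K (Elt p A (L ++ t' :: R)) (Elt p A (L ++ c :: R)) X k eq_refl).
    pose proof (edge_count_child p A L c R X k).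
    pose proof (edge_count_child p A L t' R X k).
    assert (edge_count X k c = 0). { apply (edge_count_unrelated D).
      apply Forall_app in Hfor as [? Hr]. inversion Hr; auto.
      intros W E. apply HW. rewrite Hl in E; inversion E; subst; simpl; auto. }
    assert (edge_count X k t' = 0). { apply (edge_count_unrelated D); auto.
      intros W E. apply HW. rewrite Ht in E; inversion E; subst; simpl; auto. }
    destruct (tlab_some_elt _ _ Hl) as [m' [ch' Ec]]. rewrite Ec in *.
    destruct (tlab_some_elt _ _ Ht) as [m'' [ch'' Et']]. rewrite Et' in *. simpl node_key in *. lia.
Qed.

Lemma step_reps D t n s A : NoDup (ids t) -> conf D t ->
  node_lab t n None -> parent_lab t n A ->
  exists s0, subtree (Str n s0) t /\ (s = s0 -> do_reps n s t = t) /\ NoDup (ids (do_reps n s t)) /\ conf D (do_reps n s t) /\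
  (forall X k, edge_count X k (do_reps n s t) + Nat.b2n (Nat.eqb A X && key_eqb (inr s0) k) =
               edge_count X k t + Nat.b2n (Nat.eqb A X && key_eqb (inr s) k)).
Proof.
  intros Hnd Hc Hnl Hpl.
  destruct (decomp_par _ _ _ _ Hnd Hnl Hpl) as [K [p [L [c [R [-> [Hi Hl]]]]]]].
  destruct (child_id_unique _ _ _ _ _ _ Hnd) as [F1 [F2 [F3 F4]]].
  destruct (tlab_none_str _ Hl) as [m [s0 ->]]. simpl in Hi; subst m. simpl in *.
  exists s0. split.
  { eapply subtree_trans; [|apply plug_subtree]. econstructor. apply in_or_app; right; left; reflexivity. constructor. }
  rewrite reps_plug, reps_local; auto.
  pose proof (conf_plug_in _ _ _ Hc) as Hs.
  inversion Hs as [|? ? ? Hin' Hlang Hfor]; subst.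
  split; [|split; [|split]].
  - intros ->. auto.
  - erewrite ids_plug_eq; eauto. simpl. rewrite !flat_map_app. reflexivity.
  - eapply conf_plug; eauto. constructor; auto.
    + rewrite map_app in *. simpl in *. auto.
    + apply Forall_app in Hfor as [? Hr]. inversion Hr as [|? ? ? HR]; subst. apply Forall_app; split; auto. constructor; [constructor|exact HR].
  - intros X k.
    pose proof (edge_count_plug K (Elt p A (L ++ Str n s :: R)) (Elt p A (L ++ Str n s0 :: R)) X k eq_refl).
    pose proof (edge_count_child p A L (Str n s0) R X k).
    pose proof (edge_count_child p A L (Str n s) R X k). assert (edge_count X k (Str n s0) = 0) by reflexivity. assert (edge_count X k (Str n s) = 0) by reflexivity. simpl node_key in *. lia.
Qed.

(* Every matching update has the effect described by step_effect (for
   string rewrites gain and loss vanish at all X unaffected by u). *)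
Lemma step_effect_matching D t o u : NoDup (ids t) -> conf D t -> valid_op o t -> matches D t o u ->
  valid_uat D u -> step_effect D t (apply o t) u.
Proof.
  intros Hnd Hc Hv Hm Hu.
  destruct o as [n t'|n|n t'|n s]; destruct u as [A B|A B|A B B'|A]; simpl in Hm; try contradiction; simpl.
  - destruct Hv, Hm, Hu. eapply step_ins; eauto.
  - destruct Hm, Hu. eapply step_del; eauto.
  - destruct Hv as [? ?], Hm as [? [? [? ?]]], Hu as [? [? ?]]. eapply step_rep; eauto.
  - destruct Hm as [H1 H2]. destruct (step_reps D t n s A Hnd Hc H1 H2) as [s0 [_ [_ [? [? Hcnt]]]]].
    split; [|split]; auto. intros X k [_ HX]. specialize (Hcnt X k).
    destruct (Nat.eqb_spec A X). subst; congruence. simpl in Hcnt. simpl. lia.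
Qed.

Lemma iso_node_key a b : iso a b -> node_key a = node_key b.
Proof. intros H; inversion H; auto. Qed.

Lemma iso_edge_count X k a : forall b, iso a b -> edge_count X k a = edge_count X k b.
Proof.
  induction a as [n s|n A ch1 IH] using tree_ind_nested; intros b H; inversion H; subst; auto.
  simpl.
  assert (E1 : map node_key ch1 = map node_key ch2' /\ map (edge_count X k) ch1 = map (edge_count X k) ch2').
  { clear H H4. revert ch2' H5. induction ch1; intros ch2' HF; inversion HF; subst; simpl; auto.
    rename H1 into Hxy. rename H3 into Hrest. inversion IH as [|? ? Ha Hch]; subst.
    destruct (IHch1 Hch l' Hrest) as [E1 E2]. rewrite E1, E2, (iso_node_key _ _ Hxy), (Ha y); auto. }
  destruct E1 as [E1 E2]. rewrite E1, E2.
  assert (P1 : Permutation (map node_key ch2') (map node_key ch2)) by (apply Permutation_map; apply Permutation_sym; exact H4).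
  assert (P2 : Permutation (map (edge_count X k) ch2') (map (edge_count X k) ch2)) by (apply Permutation_map; apply Permutation_sym; exact H4).
  rewrite (proj1 (Permutation_count_occ node_key_eq_dec _ _) P1 k).
  rewrite (Permutation_list_sum P2). reflexivity.
Qed.

Lemma iso_refl t : iso t t.
Proof.
  induction t as [n s|n A ch IH] using tree_ind_nested. constructor.
  apply iso_elt with ch. apply Permutation_refl.
  induction ch; constructor; inversion IH; auto.
Qed.

Definition sum_over (f : uat -> label -> label + string -> nat) (us : list uat) X k :=
  list_sum (map (fun u => f u X k) us).

Definition telescopes (D : dtd) (us : list uat) (t t' : tree) : Prop :=
  forall X k, (forall u, In u us -> unaffected D X u) ->
    edge_count X k t' + sum_over loss us X k = edge_count X k t + sum_over gain us X k.

Lemma allowed_telescope D S t os : NoDup (ids t) -> conf D t -> (forall u, S u -> valid_uat D u) ->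
  allowed D S t os ->
  exists us, Forall S us /\ NoDup (ids (apply_seq os t)) /\ conf D (apply_seq os t) /\
             telescopes D us t (apply_seq os t).
Proof.
  revert t. induction os as [|o os IH]; intros t Hnd Hc HS Hal.
  - exists []. repeat split; auto.
  - simpl in Hal. destruct Hal as [Hv [[u [Su Hm]] Hal]].
    destruct (step_effect_matching D t o u Hnd Hc Hv Hm (HS u Su)) as [Hnd' [Hc' Hcnt]].
    destruct (IH (apply o t) Hnd' Hc' HS Hal) as [us [Hus [H1 [H2 H3]]]].
    exists (u :: us). split; [constructor; auto|]. split; [auto|]. split; [auto|].
    intros X k Hall.
    specialize (H3 X k (fun u' Hu' => Hall u' (or_intror Hu'))).
    specialize (Hcnt X k (Hall u (or_introl eq_refl))).
    unfold sum_over in *. simpl. lia.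
Qed.

Lemma key_eqb_inl a b : key_eqb (inl a) (inl b) = Nat.eqb a b.
Proof. unfold key_eqb. destruct (node_key_eq_dec (inl a) (inl b)); destruct (Nat.eqb_spec a b); congruence. Qed.

Lemma key_eqb_inl_inr a s : key_eqb (inl a) (inr s) = false.
Proof. unfold key_eqb. destruct (node_key_eq_dec (inl a) (inr s)); congruence. Qed.

Definition rep_edges (X : label) (us : list uat) : list (label * label) :=
  flat_map (fun u => match u with URep A B B' => if Nat.eqb A X then [(B, B')] else [] | _ => [] end) us.

Definition not_insdel_at X u := match u with UIns A _ | UDel A _ => A <> X | _ => True end.

Lemma sum_over_gain_rep X us Q : (forall u, In u us -> not_insdel_at X u) ->
  sum_over gain us X (inl Q) = count_occ Nat.eq_dec (map snd (rep_edges X us)) Q.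
Proof.
  unfold sum_over. induction us as [|u us IH]; simpl; intros H; auto.
  rewrite IH by auto. specialize (H u (or_introl eq_refl)).
  destruct u as [A B|A B|A B B'|A]; simpl in *; auto.
  - destruct (Nat.eqb_spec A X); simpl; congruence.
  - destruct (Nat.eqb_spec A X); simpl; auto. rewrite key_eqb_inl.
    destruct (Nat.eqb_spec B' Q); destruct (Nat.eq_dec B' Q); simpl; congruence.
Qed.

Lemma sum_over_loss_rep X us Q : (forall u, In u us -> not_insdel_at X u) ->
  sum_over loss us X (inl Q) = count_occ Nat.eq_dec (map fst (rep_edges X us)) Q.
Proof.
  unfold sum_over. induction us as [|u us IH]; simpl; intros H; auto.
  rewrite IH by auto. specialize (H u (or_introl eq_refl)).
  destruct u as [A B|A B|A B B'|A]; simpl in *; auto.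
  - destruct (Nat.eqb_spec A X); simpl; congruence.
  - destruct (Nat.eqb_spec A X); simpl; auto. rewrite key_eqb_inl.
    destruct (Nat.eqb_spec B Q); destruct (Nat.eq_dec B Q); simpl; congruence.
Qed.

Lemma sum_over_ge f us u X k : In u us -> f u X k <= sum_over f us X k.
Proof. unfold sum_over. induction us; simpl; intros H; [contradiction|]. destruct H; subst; [lia|]. specialize (IHus H); lia. Qed.

Lemma sum_over_zero f us X k : (forall u, In u us -> f u X k = 0) -> sum_over f us X k = 0.
Proof. unfold sum_over. induction us; simpl; intros H; auto. rewrite H, IHus; auto. Qed.

Lemma rep_edges_in X us a b : In (a, b) (rep_edges X us) -> In (URep X a b) us.
Proof.
  unfold rep_edges. intros H. apply in_flat_map in H. destruct H as [u [Hu H]].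
  destruct u; simpl in H; try contradiction. destruct (Nat.eqb_spec l X); simpl in H; [|contradiction].
  destruct H as [H|H]; [|contradiction]. inversion H; subst; auto.
Qed.

Lemma in_rep_edges X us a b : In (URep X a b) us -> In (a, b) (rep_edges X us).
Proof.
  unfold rep_edges. intros H. apply in_flat_map. exists (URep X a b). split; auto. simpl. rewrite Nat.eqb_refl. left; auto.
Qed.

Lemma child_types_subel D u W : valid_uat D u -> In W (child_types u) -> subel D (uat_elt u) W.
Proof.
  destruct u as [A B|A B|A B B'|A]; simpl; intros Hv HW; split; try tauto.
  - destruct Hv as [_ ->]. simpl; auto.
  - destruct Hv as [_ ->]. simpl; auto.
  - destruct Hv as [_ [_ [bs [-> [? ?]]]]]. simpl. destruct HW as [<-|[<-|[]]]; auto.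
Qed.

Lemma child_types_not_above D u W : wf_dtd D -> valid_uat D u -> In W (child_types u) -> ~ leD D W (uat_elt u).
Proof.
  intros Hwf Vu HW HL. destruct Hwf as [_ [_ [Hac _]]]. apply (Hac (uat_elt u)).
  eapply t_rt. apply (child_types_subel D u W Vu HW). exact HL.
Qed.

Lemma gain_inr u X s : gain u X (inr s) = 0.
Proof. destruct u; simpl; auto; rewrite key_eqb_inl_inr, Bool.andb_false_r; auto. Qed.
Lemma loss_inr u X s : loss u X (inr s) = 0.
Proof. destruct u; simpl; auto; rewrite key_eqb_inl_inr, Bool.andb_false_r; auto. Qed.

Lemma key_eqb_inr_refl s : key_eqb (inr s) (inr s) = true.
Proof. unfold key_eqb. destruct (node_key_eq_dec (inr s) (inr s)); congruence. Qed.
Lemma key_eqb_inr_neq s s0 : s <> s0 -> key_eqb (inr s) (inr s0) = false.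
Proof. unfold key_eqb. destruct (node_key_eq_dec (inr s) (inr s0)); congruence. Qed.

Lemma gain_other u X k : uat_elt u <> X -> gain u X k = 0.
Proof. destruct u; simpl; intros; auto; destruct (Nat.eqb_spec l X); simpl; auto; congruence. Qed.
Lemma loss_other u X k : uat_elt u <> X -> loss u X k = 0.
Proof. destruct u; simpl; intros; auto; destruct (Nat.eqb_spec l X); simpl; auto; congruence. Qed.

Lemma star_sum_gain_zero D us A B E : Forall (valid_uat D) us -> rg D A = RStar B ->
  ~ In (UIns A E) us -> sum_over gain us A (inl E) = 0.
Proof.
  rewrite Forall_forall. intros Hv Hrg Hn. apply sum_over_zero. intros u Hu.
  specialize (Hv u Hu). destruct u as [A' B'|A' B'|A' B1 B2|A']; simpl; auto.
  - rewrite key_eqb_inl. destruct (Nat.eqb_spec A' A); destruct (Nat.eqb_spec B' E); simpl; auto.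
    subst. contradiction.
  - destruct (Nat.eqb_spec A' A); simpl; auto. subst.
    destruct Hv as [_ [_ [bs [E' _]]]]. congruence.
Qed.

Lemma star_sum_loss_zero D us A B E : Forall (valid_uat D) us -> rg D A = RStar B ->
  ~ In (UDel A E) us -> sum_over loss us A (inl E) = 0.
Proof.
  rewrite Forall_forall. intros Hv Hrg Hn. apply sum_over_zero. intros u Hu.
  specialize (Hv u Hu). destruct u as [A' B'|A' B'|A' B1 B2|A']; simpl; auto.
  - rewrite key_eqb_inl. destruct (Nat.eqb_spec A' A); destruct (Nat.eqb_spec B' E); simpl; auto.
    subst. contradiction.
  - destruct (Nat.eqb_spec A' A); simpl; auto. subst.
    destruct Hv as [_ [_ [bs [E' _]]]]. congruence.
Qed.

Lemma disj_not_insdel D us A bs : Forall (valid_uat D) us -> rg D A = RDisj bs ->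
  forall u, In u us -> not_insdel_at A u.
Proof.
  rewrite Forall_forall. intros Hv Hrg u Hu. specialize (Hv u Hu).
  destruct u; simpl; auto; intros <-; destruct Hv as [_ E]; congruence.
Qed.

Lemma rep_edges_GA D S us A a b : Forall S us -> (forall u, S u -> valid_uat D u) ->
  edge_in (rep_edges A us) a b -> GA D S A a b.
Proof.
  rewrite Forall_forall. intros Hus HS He. apply rep_edges_in in He.
  assert (Vu := HS _ (Hus _ He)). destruct Vu as [HA [_ [bs [E [Ha Hb]]]]].
  exists bs. repeat split; auto.
Qed.

Section Soundness.

Variable D : dtd.
Variable S : uset.
Hypothesis Hwf : wf_dtd D.
Hypothesis HS : forall u, S u -> valid_uat D u.

(* If the trace us is balanced at X, then every child type Y touched by a
   UAT of us at X puts every valid u with Y <= elt(u) into T(S): an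
   insertion must be compensated by a deletion (and conversely), and a
   replacement lies on a cycle of replacements. *)
Lemma balance_forces_top us X u1 Y u : Forall S us ->
  (forall k, sum_over loss us X k = sum_over gain us X k) ->
  In u1 us -> uat_elt u1 = X -> In Y (child_types u1) ->
  valid_uat D u -> leD D Y (uat_elt u) -> Top D S u.
Proof.
  intros Hus Hbal Hu1 HX HY Vu HYu.
  assert (Vus : Forall (valid_uat D) us) by (eapply Forall_impl; [exact HS|exact Hus]).
  assert (Su1 : S u1) by (rewrite Forall_forall in Hus; auto).
  pose proof (HS u1 Su1) as Vu1.
  destruct u1 as [A B|A B|A B B'|A]; simpl in HX, HY; subst X.
  - destruct HY as [->|[]]. destruct Vu1 as [HAe Hrg].
    destruct (classic (In (UDel A Y) us)) as [Hd|Hd].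
    + right; left. split; auto. exists A, Y. rewrite Forall_forall in Hus. repeat split; auto.
    + specialize (Hbal (inl Y)). rewrite (star_sum_loss_zero D us A Y Y Vus Hrg Hd) in Hbal.
      pose proof (sum_over_ge gain us (UIns A Y) A (inl Y) Hu1) as Hge.
      simpl in Hge. rewrite Nat.eqb_refl, key_eqb_inl, Nat.eqb_refl in Hge. simpl in Hge. lia.
  - destruct HY as [->|[]]. destruct Vu1 as [HAe Hrg].
    destruct (classic (In (UIns A Y) us)) as [Hi|Hi].
    + right; left. split; auto. exists A, Y. rewrite Forall_forall in Hus. repeat split; auto.
    + specialize (Hbal (inl Y)). rewrite (star_sum_gain_zero D us A Y Y Vus Hrg Hi) in Hbal.
      pose proof (sum_over_ge loss us (UDel A Y) A (inl Y) Hu1) as Hge.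
      simpl in Hge. rewrite Nat.eqb_refl, key_eqb_inl, Nat.eqb_refl in Hge. simpl in Hge. lia.
  - destruct Vu1 as [HAe [HBB [bs [Hrg [HB HB']]]]].
    assert (HP : Permutation (map fst (rep_edges A us)) (map snd (rep_edges A us))).
    { apply (Permutation_count_occ Nat.eq_dec). intros Q.
      rewrite <- sum_over_loss_rep, <- sum_over_gain_rep by (eapply disj_not_insdel; eauto). auto. }
    assert (Hback := balanced_cycle _ _ _ HP (in_rep_edges _ _ _ _ Hu1)).
    apply rt_mono with (R2 := GA D S A) in Hback; [|intros; eapply rep_edges_GA; eauto].
    assert (Hedge : GA D S A B B') by (exists bs; rewrite Forall_forall in Hus; repeat split; auto).
    right; right; left. split; auto. exists A, bs, Y. repeat split; auto.
    + destruct HY as [<-|[<-|[]]]; auto.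
    + unfold GAplus. destruct HY as [<-|[<-|[]]]; [eapply t_rt|eapply rt_t]; eauto.
  - destruct HY.
Qed.

(* The data of an inconsistency: a conforming tree t, an allowed trace us
   leading to t', and a non-trivial update o0 of type u0 whose result is
   isomorphic to t'. *)
Variables (t t' : tree) (us : list uat) (o0 : op) (u0 : uat).
Hypothesis Ht_nodup : NoDup (ids t).
Hypothesis Ht_conf : conf D t.
Hypothesis Hus : Forall S us.
Hypothesis Htel : telescopes D us t t'.
Hypothesis Ho0_valid : valid_op o0 t.
Hypothesis Ho0_match : matches D t o0 u0.
Hypothesis Hu0_valid : valid_uat D u0.
Hypothesis Ho0_nontrivial : ~ iso (apply o0 t) t.
Hypothesis Hsame : forall X k, edge_count X k t' = edge_count X k (apply o0 t).

Let C := uat_elt u0.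

Lemma site_update_above X k : leD D X C -> X <> C -> edge_count X k (apply o0 t) = edge_count X k t.
Proof.
  intros HX HXC. destruct (classic (exists A, u0 = URepS A)) as [[A E]|NE].
  - rewrite E in Ho0_match. destruct o0; simpl in Ho0_match; try contradiction.
    destruct Ho0_match as [H1 H2].
    destruct (step_reps D t n s A Ht_nodup Ht_conf H1 H2) as [s0 [_ [_ [_ [_ Hcnt]]]]].
    specialize (Hcnt X k).
    assert (A <> X) by (intro; subst; apply HXC; reflexivity).
    destruct (Nat.eqb_spec A X); [contradiction|]. simpl in Hcnt |- *. lia.
  - destruct (step_effect_matching D t o0 u0 Ht_nodup Ht_conf Ho0_valid Ho0_match Hu0_valid)
      as [_ [_ Hcnt]].
    assert (Hunaff : unaffected D X u0).
    { split; [|intro E; apply NE; eauto].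
      intros W HW HWX. apply (child_types_not_above D u0 W Hwf Hu0_valid HW).
      eapply rt_trans; eauto. }
    specialize (Hcnt X k Hunaff).
    rewrite gain_other, loss_other in Hcnt by (intro E; apply HXC; exact (eq_sym E)). lia.
Qed.

(* If some UAT of the trace touches a child type below C, then u0 is in
   T(S): a minimal such child type Y sits under some X strictly above C,
   where the trace must be balanced. *)
Lemma touched_above_top :
  (exists W, In W (flat_map child_types us) /\ leD D W C) -> Top D S u0.
Proof.
  intros Ex.
  assert (Hacyc : forall A, ~ clos_trans label (subel D) A A) by apply Hwf.
  destruct (minimal_exists (fun W => leD D W C) (clos_trans label (subel D)) _ Hacyc
              (fun x y z => t_trans _ _ x y z) Ex) as [Y [HY [HYC Hmin]]].
  apply in_flat_map in HY. destruct HY as [u1 [Hu1 HY]].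
  assert (Su1 : S u1) by (rewrite Forall_forall in Hus; auto).
  assert (Hsub := child_types_subel D u1 Y (HS u1 Su1) HY).
  set (X := uat_elt u1) in *.
  assert (HXC : leD D X C) by (eapply rt_trans; [apply rt_step; exact Hsub|exact HYC]).
  assert (HXnC : X <> C).
  { intro E. apply (Hacyc C). rewrite E in Hsub. eapply t_rt; eauto. }
  assert (Hunaff : forall u, In u us -> unaffected D X u).
  { intros u Hu. split.
    - intros W HW HWX. apply (Hmin W); [apply in_flat_map; eauto| |].
      + eapply rt_trans; eauto.
      + eapply rt_t; eauto.
    - intro E. subst u. rewrite Forall_forall in Hus. destruct (HS _ (Hus _ Hu)) as [_ V].
      destruct Hsub as [_ Hs]. fold X in Hs. rewrite V in Hs. destruct Hs. }
  apply (balance_forces_top us X u1 Y u0); auto.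
  intros k. specialize (Htel X k Hunaff).
  rewrite Hsame, site_update_above in Htel by auto. lia.
Qed.

Definition free_below_site : Prop :=
  forall u W, In u us -> In W (child_types u) -> ~ leD D W C.

Lemma site_balance : free_below_site ->
  (forall A, u0 <> URepS A) -> (forall u, In u us -> u <> URepS C) ->
  forall k, sum_over gain us C k + loss u0 C k = sum_over loss us C k + gain u0 C k.
Proof.
  intros Hfree Hne Hstr k.
  assert (Htrace : edge_count C k t' + sum_over loss us C k = edge_count C k t + sum_over gain us C k)
    by (apply Htel; intros u Hu; split; eauto).
  destruct (step_effect_matching D t o0 u0 Ht_nodup Ht_conf Ho0_valid Ho0_match Hu0_valid)
    as [_ [_ Hstep]].
  specialize (Hstep C k (conj (fun W HW => child_types_not_above D u0 W Hwf Hu0_valid HW) (Hne C))).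
  rewrite Hsame in Htrace. lia.
Qed.

Lemma no_string_rewrite_at A : (exists B, rg D A = RStar B) \/ (exists bs, rg D A = RDisj bs) ->
  forall u, In u us -> u <> URepS A.
Proof.
  intros Hrg u Hu ->. rewrite Forall_forall in Hus. destruct (HS _ (Hus _ Hu)) as [_ V].
  destruct Hrg as [[B E]|[bs E]]; congruence.
Qed.

Lemma insertion_site_in_trace A E : u0 = UIns A E -> free_below_site -> In u0 us.
Proof.
  intros Eu0 Hfree. pose proof Hu0_valid as Vu0. rewrite Eu0 in Vu0 |- *.
  destruct Vu0 as [HAe Hrg].
  assert (Hstr : forall u, In u us -> u <> URepS C)
    by (unfold C; rewrite Eu0; apply no_string_rewrite_at; eauto).
  assert (Hbal := site_balance Hfree ltac:(rewrite Eu0; discriminate) Hstr (inl E)).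
  unfold C in Hbal. rewrite Eu0 in Hbal. simpl in Hbal.
  rewrite Nat.eqb_refl, key_eqb_inl, Nat.eqb_refl in Hbal. simpl in Hbal.
  destruct (classic (In (UIns A E) us)) as [Hi|Hi]; [exact Hi|].
  rewrite (star_sum_gain_zero D us A E E) in Hbal; auto; [lia|].
  eapply Forall_impl; [exact HS|exact Hus].
Qed.

Lemma deletion_site_in_trace A E : u0 = UDel A E -> free_below_site -> In u0 us.
Proof.
  intros Eu0 Hfree. pose proof Hu0_valid as Vu0. rewrite Eu0 in Vu0 |- *.
  destruct Vu0 as [HAe Hrg].
  assert (Hstr : forall u, In u us -> u <> URepS C)
    by (unfold C; rewrite Eu0; apply no_string_rewrite_at; eauto).
  assert (Hbal := site_balance Hfree ltac:(rewrite Eu0; discriminate) Hstr (inl E)).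
  unfold C in Hbal. rewrite Eu0 in Hbal. simpl in Hbal.
  rewrite Nat.eqb_refl, key_eqb_inl, Nat.eqb_refl in Hbal. simpl in Hbal.
  destruct (classic (In (UDel A E) us)) as [Hd|Hd]; [exact Hd|].
  rewrite (star_sum_loss_zero D us A E E) in Hbal; auto; [lia|].
  eapply Forall_impl; [exact HS|exact Hus].
Qed.

(* A replacement Bi -> Bk can only be emulated along a path of allowed
   replacements from Bi to Bk: the replace edges of the trace together
   with the edge (Bk, Bi) form a balanced flow. *)
Lemma replacement_site_path A Bi Bk : u0 = URep A Bi Bk -> free_below_site ->
  clos_refl_trans label (GA D S A) Bi Bk.
Proof.
  intros Eu0 Hfree. pose proof Hu0_valid as Vu0. rewrite Eu0 in Vu0.
  destruct Vu0 as [HAe [HBB [bs [Hrg [HBi HBk]]]]].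
  assert (Vus : Forall (valid_uat D) us) by (eapply Forall_impl; [exact HS|exact Hus]).
  assert (Hstr : forall u, In u us -> u <> URepS C)
    by (unfold C; rewrite Eu0; apply no_string_rewrite_at; eauto).
  assert (HP : Permutation (Bi :: map snd (rep_edges A us)) (Bk :: map fst (rep_edges A us))).
  { apply (Permutation_count_occ Nat.eq_dec). intros Q. simpl.
    assert (Hbal := site_balance Hfree ltac:(rewrite Eu0; discriminate) Hstr (inl Q)).
    unfold C in Hbal. rewrite Eu0 in Hbal. simpl in Hbal.
    rewrite sum_over_loss_rep, sum_over_gain_rep in Hbal by (eapply disj_not_insdel; eauto).
    rewrite Nat.eqb_refl, !key_eqb_inl in Hbal. simpl in Hbal.
    destruct (Nat.eq_dec Bi Q); destruct (Nat.eq_dec Bk Q);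
      destruct (Nat.eqb_spec Bi Q); destruct (Nat.eqb_spec Bk Q); simpl in *; try congruence; lia. }
  apply balanced_reach in HP. eapply rt_mono; [|exact HP].
  intros a b He. eapply rep_edges_GA; eauto.
Qed.

Lemma string_site_in_trace A : u0 = URepS A -> free_below_site -> In u0 us.
Proof.
  intros Eu0 Hfree. rewrite Eu0. apply NNPP. intros Hr.
  pose proof Ho0_match as Hm0. pose proof Ho0_nontrivial as Hnt. rewrite Eu0 in Hm0.
  destruct o0 as [| |n s|n s]; simpl in Hm0; try contradiction. destruct Hm0 as [H1 H2].
  destruct (step_reps D t n s A Ht_nodup Ht_conf H1 H2) as [s0 [_ [Heq [_ [_ Hcnt]]]]].
  destruct (string_dec s s0) as [Es|Ns].
  { apply Hnt. simpl. rewrite Heq; auto. apply iso_refl. }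
  assert (Htrace : edge_count A (inr s0) t' + sum_over loss us A (inr s0) =
                   edge_count A (inr s0) t + sum_over gain us A (inr s0)).
  { apply Htel. intros u Hu. split.
    - intros W HW HWA. apply (Hfree u W Hu HW). unfold C. rewrite Eu0. exact HWA.
    - intros ->. contradiction. }
  specialize (Hcnt A (inr s0)).
  rewrite (sum_over_zero loss), (sum_over_zero gain), Hsame in Htrace
    by (intros; first [apply loss_inr|apply gain_inr]).
  rewrite Nat.eqb_refl, key_eqb_inr_refl, key_eqb_inr_neq in Hcnt by auto.
  simpl in Hcnt, Htrace. lia.
Qed.

Lemma untouched_site_top : free_below_site -> Top D S u0.
Proof.
  intros Hfree. pose proof Hus as Hin. rewrite Forall_forall in Hin.
  assert (Hcases : (exists A E, u0 = UIns A E) \/ (exists A E, u0 = UDel A E) \/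
                   (exists A Bi Bk, u0 = URep A Bi Bk) \/ (exists A, u0 = URepS A))
    by (case u0; [left|right; left|right; right; left|right; right; right]; eauto).
  destruct Hcases as [[A [E Eu0]]|[[A [E Eu0]]|[[A [Bi [Bk Eu0]]]|[A Eu0]]]].
  - left. apply Hin, (insertion_site_in_trace A E); auto.
  - left. apply Hin, (deletion_site_in_trace A E); auto.
  - pose proof Hu0_valid as Vu0. rewrite Eu0 in Vu0 |- *.
    destruct Vu0 as [HAe [HBB [bs [Hrg [HBi HBk]]]]].
    destruct (rt_cases _ _ _ (replacement_site_path A Bi Bk Eu0 Hfree)) as [E|Hpath];
      [contradiction|].
    right; right; right. exists A, bs, Bi, Bk. repeat split; auto.
  - left. apply Hin, (string_site_in_trace A); auto.
Qed.

Lemma inconsistency_top : Top D S u0.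
Proof.
  destruct (classic (exists W, In W (flat_map child_types us) /\ leD D W C)) as [Ex|NEx].
  - exact (touched_above_top Ex).
  - apply untouched_site_top. intros u W Hu HW HWC. apply NEx. exists W.
    split; auto. apply in_flat_map; eauto.
Qed.

End Soundness.

Lemma top_disjoint_consistent D P : wf_dtd D ->
  (forall u, pA P u -> valid_uat D u) -> (forall u, pF P u -> valid_uat D u) ->
  (forall u, Top D (pA P) u -> ~ pF P u) -> consistent D P.
Proof.
  intros Hwf HA HF HT [t [os [o0 [[Hnd [_ Hc]] [_ [Hal [[u0 [Fu0 Hm0]] [Hv0 [Hnt Hiso]]]]]]]]].
  destruct (allowed_telescope D (pA P) t os Hnd Hc HA Hal) as [us [Hus [_ [_ Htel]]]].
  apply (HT u0); auto.
  apply (inconsistency_top D (pA P) Hwf HA t (apply_seq os t) us o0 u0); auto.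
  intros X k. apply iso_edge_count; auto.
Qed.

(* Erasing identifiers (all set to 0); trees with equal erasures are
   copies of each other. *)
Fixpoint erase (t : tree) : tree :=
  match t with Str _ s => Str 0 s | Elt _ A ch => Elt 0 A (map erase ch) end.

Fixpoint tree_size (t : tree) : nat :=
  match t with Str _ _ => 1 | Elt _ _ ch => S (list_sum (map tree_size ch)) end.

Fixpoint number (k : nat) (t : tree) {struct t} : tree :=
  match t with
  | Str _ s => Str k s
  | Elt _ A ch => Elt k A ((fix F (k : nat) (l : list tree) : list tree :=
       match l with [] => [] | c :: l' => number k c :: F (k + tree_size c) l' end) (S k) ch)
  end.

Fixpoint numlist (k : nat) (l : list tree) : list tree :=
  match l with [] => [] | c :: l' => number k c :: numlist (k + tree_size c) l' end.

Lemma number_elt k n A ch : number k (Elt n A ch) = Elt k A (numlist (S k) ch).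
Proof. simpl. f_equal. Qed.

Lemma number_ids t : forall k, ids (number k t) = seq k (tree_size t).
Proof.
  induction t as [n s|n A ch IH] using tree_ind_nested; intros k; auto.
  rewrite number_elt. simpl. f_equal. generalize (S k). induction ch; intros j; simpl; auto.
  inversion IH as [|? ? Ha Hch]; subst. rewrite Ha, IHch, seq_app; auto.
Qed.

Lemma number_erase t : forall k, erase (number k t) = erase t.
Proof.
  induction t as [n s|n A ch IH] using tree_ind_nested; intros k; auto.
  rewrite number_elt. simpl. f_equal. generalize (S k). induction ch; intros j; simpl; auto.
  inversion IH as [|? ? Ha Hch]; subst. rewrite Ha, IHch; auto.
Qed.

Lemma number_nodup k t : NoDup (ids (number k t)).
Proof. rewrite number_ids. apply seq_NoDup. Qed.

Lemma number_ge k t x : In x (ids (number k t)) -> k <= x.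
Proof. rewrite number_ids. intros H. apply in_seq in H. lia. Qed.

Definition fresh_bound (t : tree) : nat := S (list_max (ids t)).

Lemma fresh_bound_gt t x : In x (ids t) -> x < fresh_bound t.
Proof.
  intros H. unfold fresh_bound. assert (list_max (ids t) <= list_max (ids t)) by lia.
  apply list_max_le in H0. rewrite Forall_forall in H0. specialize (H0 x H). lia.
Qed.

Lemma tlab_erase t : tlab (erase t) = tlab t.
Proof. destruct t; auto. Qed.

Lemma erase_tlab t1 t2 : erase t1 = erase t2 -> tlab t1 = tlab t2.
Proof. intros H. rewrite <- (tlab_erase t1), <- (tlab_erase t2), H. auto. Qed.

Lemma erase_iso t1 : forall t2, erase t1 = erase t2 -> iso t1 t2.
Proof.
  induction t1 as [n s|n A ch IH] using tree_ind_nested; intros t2 H; destruct t2; simpl in H; inversion H; subst.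
  - constructor.
  - apply iso_elt with l0. apply Permutation_refl. clear H. revert l0 H2. induction ch; intros l1 E; destruct l1; simpl in E; inversion E.
    constructor. inversion IH as [|? ? Ha Hch]; subst. constructor; auto.
Qed.

Lemma erase_conf D t1 : forall t2, erase t1 = erase t2 -> conf D t1 -> conf D t2.
Proof.
  induction t1 as [n s|n A ch IH] using tree_ind_nested; intros t2 H Hc; destruct t2; simpl in H; inversion H; subst.
  - constructor.
  - inversion Hc as [|? ? ? Hin Hl Hf]; subst. constructor; auto.
    + replace (map tlab l0) with (map tlab ch); auto. clear -H2. revert l0 H2. induction ch; intros l E; destruct l; simpl in E; inversion E; auto.
      simpl. rewrite (erase_tlab a t H0). f_equal; auto.
    + clear H Hc Hl. revert l0 H2. induction ch; intros l1 E; destruct l1; simpl in E; inversion E; auto.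
      inversion IH as [|? ? Ha Hch]; subst. inversion Hf; subst. constructor; auto.
Qed.

Lemma renumber_ID D A r M : conf D r -> tlab r = Some A -> ID D A (number M r).
Proof.
  intros Hc Ht. split; [apply number_nodup|]. split.
  - rewrite (erase_tlab _ r); auto. apply number_erase.
  - apply (erase_conf D r); auto. symmetry; apply number_erase.
Qed.

Lemma erase_plug K s1 s2 : erase s1 = erase s2 -> erase (plug K s1) = erase (plug K s2).
Proof. induction K; simpl; intros; auto. rewrite !map_app. simpl. rewrite IHK; auto. Qed.

Lemma erase_decomp K s : forall T, erase T = erase (plug K s) -> exists K' s', T = plug K' s' /\ erase s' = erase s.
Proof.
  induction K as [|m B l K IHK r]; simpl; intros T H.
  - exists Hole, T. auto.
  - destruct T as [n A ch|]; simpl in H; inversion H; subst. rewrite map_app in H2. simpl in H2.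
    apply map_eq_app in H2. destruct H2 as [l1 [l2 [-> [E1 E2]]]].
    apply map_eq_cons in E2. destruct E2 as [c [l3 [-> [E3 E4]]]].
    destruct (IHK c E3) as [K' [s' [-> E]]]. exists (Frame n B l1 K' l3), s'. auto.
Qed.

Lemma erase_single_child s x A b0 : erase s = Elt x A [erase b0] -> exists n b, s = Elt n A [b] /\ erase b = erase b0.
Proof.
  destruct s as [n A' ch|]; simpl; intros H; inversion H; subst.
  destruct ch as [|b [|]]; simpl in H3; inversion H3. eauto.
Qed.

Lemma erase_str s v : erase s = Str 0 v -> exists n, s = Str n v.
Proof. destruct s; simpl; intros H; inversion H; eauto. Qed.

Definition child_type (D : dtd) (B A : label) : Prop := subel D A B.

Lemma desc_in_ele D : wf_dtd D -> forall A B, clos_trans label (subel D) A B -> In B (ele D).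
Proof.
  intros Hwf A B H. induction H; auto. destruct H as [HA HB]. destruct Hwf as [_ [H _]]. apply (H x HA); auto.
Qed.

Lemma child_type_wf D : wf_dtd D -> forall A, Acc (child_type D) A.
Proof.
  intros Hwf.
  assert (forall n (l : list label) A, List.length l <= n -> (forall B, clos_trans label (subel D) A B -> In B l) -> Acc (child_type D) A).
  { induction n; intros l A Hl H.
    - constructor. intros B HB. exfalso. destruct l; simpl in Hl; [|lia]. apply (H B). apply t_step; auto.
    - constructor. intros B HB. unfold child_type in HB.
      assert (InB : In B l) by (apply H; apply t_step; auto).
      apply (IHn (remove Nat.eq_dec B l)).
      + pose proof (remove_length_lt Nat.eq_dec l B InB). apply Nat.lt_succ_r. eapply Nat.lt_le_trans; [exact H0|exact Hl].
      + intros B' HB'. apply in_in_remove.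
        * intro E; subst B'. destruct Hwf as [_ [_ [Hac _]]]. apply (Hac B); auto.
        * apply H. eapply t_trans; eauto. apply t_step; auto. }
  intros A. apply (H (List.length (ele D)) (ele D) A); auto. intros; eapply desc_in_ele; eauto.
Qed.

Lemma forest_exists D (bs : list label) :
  (forall B, In B bs -> exists s, conf D s /\ tlab s = Some B) ->
  exists ts, map tlab ts = map Some bs /\ Forall (conf D) ts.
Proof.
  induction bs; intros H. exists []; simpl; auto.
  destruct (H a (or_introl eq_refl)) as [s [Hs Ht]]. destruct IHbs as [ts [E F]]. intros; apply H; right; auto.
  exists (s :: ts). simpl. rewrite Ht, E. auto.
Qed.

Lemma tree_exists D : wf_dtd D -> forall A, In A (ele D) -> exists s, conf D s /\ tlab s = Some A.
Proof.
  intros Hwf A. induction (child_type_wf D Hwf A) as [A _ IH]. intros HA.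
  assert (IH' : forall B, In B (subtypes (rg D A)) -> exists s, conf D s /\ tlab s = Some B).
  { intros B HB. apply IH. split; auto. destruct Hwf as [_ [H _]]. apply (H A HA); auto. }
  destruct (rg D A) eqn:E.
  - exists (Elt 0 A [Str 0 ""]). split; auto. constructor; auto. rewrite E; simpl; auto. repeat constructor.
  - exists (Elt 0 A []). split; auto. constructor; auto. rewrite E; simpl; auto.
  - destruct (forest_exists D l IH') as [ts [E1 E2]]. exists (Elt 0 A ts). split; auto. constructor; auto.
    rewrite E; simpl. rewrite E1. apply Permutation_refl.
  - destruct Hwf as [_ [Hw _]]. destruct (Hw A HA) as [_ Hd]. rewrite E in Hd. destruct Hd as [_ Hne].
    destruct l as [|B l]; [congruence|]. destruct (IH' B (or_introl eq_refl)) as [s [Hs Ht]].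
    exists (Elt 0 A [s]). split; auto. constructor; auto. rewrite E; simpl. exists B. rewrite Ht. split; auto; left; auto.
  - exists (Elt 0 A []). split; auto. constructor; auto. rewrite E; simpl; auto.
Qed.

Lemma fresh_instance D A M : wf_dtd D -> In A (ele D) ->
  exists f, ID D A f /\ forall x, In x (ids f) -> M <= x.
Proof.
  intros Hwf HA. destruct (tree_exists D Hwf A HA) as [c [Hc Ht]].
  exists (number M c). split; [apply renumber_ID; auto|apply number_ge].
Qed.

Lemma path_ctx D : wf_dtd D -> forall T0 Tk, leD D T0 Tk -> forall s, conf D s -> tlab s = Some Tk ->
  exists K, conf D (plug K s) /\ tlab (plug K s) = Some T0.
Proof.
  intros Hwf T0 Tk H. apply clos_rt_rt1n in H. induction H; intros s Hs Ht.
  - exists Hole. auto.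
  - destruct (IHclos_refl_trans_1n s Hs Ht) as [K [HK HKt]]. destruct H as [Hx Hy].
    assert (Hsub : forall B, In B (subtypes (rg D x)) -> exists s, conf D s /\ tlab s = Some B).
    { intros B HB. apply tree_exists; auto. destruct Hwf as [_ [Hw _]]. apply (Hw x Hx); auto. }
    destruct (rg D x) eqn:E; simpl in Hy; try contradiction.
    + apply in_split in Hy. destruct Hy as [bs1 [bs2 Eb]].
      destruct (forest_exists D bs1) as [lf [El Fl]]. intros; apply Hsub; rewrite Eb; apply in_or_app; auto.
      destruct (forest_exists D bs2) as [rf [Er Fr]]. intros; apply Hsub; rewrite Eb; apply in_or_app; right; right; auto.
      exists (Frame 0 x lf K rf). simpl. split; auto. constructor; auto.
      * rewrite E, Eb. simpl. rewrite map_app, map_app. simpl. rewrite El, Er, HKt. apply Permutation_refl.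
      * apply Forall_app; split; auto.
    + exists (Frame 0 x [] K []). simpl. split; auto. constructor; auto. rewrite E. simpl. exists y. rewrite HKt; auto.
    + destruct Hy as [<-|[]]. exists (Frame 0 x [] K []). simpl. split; auto. constructor; auto. rewrite E. simpl. rewrite HKt. auto.
Qed.

Lemma embed_in_document D : wf_dtd D -> forall Z s0, In Z (ele D) -> conf D s0 -> tlab s0 = Some Z ->
  exists T K s, IDroot D T /\ T = plug K s /\ erase s = erase s0.
Proof.
  intros Hwf Z s0 HZ Hc Ht.
  assert (Hr : leD D (rt D) Z) by (apply Hwf; auto).
  destruct (path_ctx D Hwf _ _ Hr s0 Hc Ht) as [K0 [HK Ht0]].
  set (T := number 0 (plug K0 s0)).
  assert (ET : erase T = erase (plug K0 s0)) by apply number_erase.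
  destruct (erase_decomp K0 s0 T ET) as [K [s [E1 E2]]].
  exists T, K, s. split; auto. split; [apply number_nodup|]. split.
  - rewrite (erase_tlab _ _ ET). auto.
  - apply (erase_conf D (plug K0 s0)); auto.
Qed.

(* A matching update of an element type really changes the document (up
   to isomorphism): its counts at its own element type change.  For string
   rewrites this needs the new string to differ from the old one. *)
Lemma nontrivial_update D T o u : wf_dtd D -> NoDup (ids T) -> conf D T -> valid_op o T ->
  matches D T o u -> valid_uat D u ->
  (forall n s, o = ORepS n s -> exists v, subtree (Str n v) T /\ v <> s) ->
  ~ iso (apply o T) T.
Proof.
  intros Hwf Hnd Hc Hv Hm Vu Hs Hiso.
  assert (Hcnt : forall X k, edge_count X k (apply o T) = edge_count X k T)
    by (intros; apply iso_edge_count; auto).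
  assert (Hself : (forall A', u <> URepS A') -> unaffected D (uat_elt u) u).
  { intros Hne. split; [|apply Hne]. intros W HW. apply child_types_not_above; auto. }
  destruct u as [A E|A E|A B B'|A].
  1-3: destruct (step_effect_matching D T o _ Hnd Hc Hv Hm Vu) as [_ [_ H]];
    specialize (Hself (fun A' => ltac:(discriminate))).
  - specialize (H A (inl E) Hself). rewrite Hcnt in H. simpl in H.
    rewrite Nat.eqb_refl, key_eqb_inl, Nat.eqb_refl in H. simpl in H. lia.
  - specialize (H A (inl E) Hself). rewrite Hcnt in H. simpl in H.
    rewrite Nat.eqb_refl, key_eqb_inl, Nat.eqb_refl in H. simpl in H. lia.
  - specialize (H A (inl B) Hself). rewrite Hcnt in H. simpl in H.
    rewrite Nat.eqb_refl, !key_eqb_inl, Nat.eqb_refl in H. destruct Vu as [_ [HBB _]].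
    destruct (Nat.eqb_spec B' B); [congruence|]. simpl in H. lia.
  - destruct o; simpl in Hm; try contradiction. destruct Hm as [H1 H2].
    destruct (step_reps D T n s A Hnd Hc H1 H2) as [s0 [Hst [_ [_ [_ H]]]]].
    destruct (Hs n s eq_refl) as [v [Hv' Hvs]].
    assert (E : Str n v = Str n s0) by (eapply subtree_unique; eauto). inversion E; subst v.
    specialize (H A (inr s0)). rewrite Hcnt in H.
    rewrite Nat.eqb_refl, key_eqb_inr_refl, key_eqb_inr_neq in H by auto.
    simpl in H. lia.
Qed.

Definition fits_site (u : uat) (c : tree) : Prop :=
  match u with
  | UIns _ E | UDel _ E => tlab c = Some E
  | URep _ B _ => tlab c = Some B
  | URepS _ => exists n, c = Str n ""
  end.

Lemma fits_site_erase u c c0 : erase c = erase c0 -> fits_site u c0 -> fits_site u c.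
Proof.
  intros E. destruct u; simpl; intros H; try (rewrite (erase_tlab _ _ E); auto).
  destruct H as [n ->]. simpl in E. apply erase_str in E. auto.
Qed.

Lemma sub_in_ele D A B : wf_dtd D -> In A (ele D) -> In B (subtypes (rg D A)) -> In B (ele D).
Proof. intros [_ [H _]] HA HB. apply (H A HA); auto. Qed.

Lemma site_child_exists D u : wf_dtd D -> valid_uat D u ->
  exists c0, conf D c0 /\ fits_site u c0 /\ conf D (Elt 0 (uat_elt u) [c0]).
Proof.
  intros Hwf Vu. destruct u as [A E|A E|A B B'|A]; simpl in *.
  - destruct Vu as [HA Hrg]. assert (In E (ele D)) by (eapply sub_in_ele; eauto; rewrite Hrg; simpl; auto).
    destruct (tree_exists D Hwf E H) as [c [Hc Ht]]. exists c. repeat split; auto. constructor; auto.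
    rewrite Hrg. simpl. rewrite Ht. auto.
  - destruct Vu as [HA Hrg]. assert (In E (ele D)) by (eapply sub_in_ele; eauto; rewrite Hrg; simpl; auto).
    destruct (tree_exists D Hwf E H) as [c [Hc Ht]]. exists c. repeat split; auto. constructor; auto.
    rewrite Hrg. simpl. rewrite Ht. auto.
  - destruct Vu as [HA [_ [bs [Hrg [HB _]]]]]. assert (In B (ele D)) by (eapply sub_in_ele; eauto; rewrite Hrg; simpl; auto).
    destruct (tree_exists D Hwf B H) as [c [Hc Ht]]. exists c. repeat split; auto. constructor; auto.
    rewrite Hrg. simpl. rewrite Ht. eauto.
  - destruct Vu as [HA Hrg]. exists (Str 0 ""). repeat split; eauto. constructor. constructor; auto.
    rewrite Hrg; simpl; auto. repeat constructor.
Qed.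

Definition fresh_fits D (u : uat) (f : tree) : Prop :=
  match u with UIns _ E => ID D E f | URep _ _ B' => ID D B' f | _ => True end.

Lemma fresh_exists D u : wf_dtd D -> valid_uat D u -> forall M,
  exists f, fresh_fits D u f /\ forall x, In x (ids f) -> M <= x.
Proof.
  intros Hwf Vu M. destruct u as [A E|A E|A B B'|A]; simpl in *.
  - destruct Vu as [HA Hrg]. apply fresh_instance; auto.
    eapply sub_in_ele; eauto. rewrite Hrg; simpl; auto.
  - exists (Str M ""). split; auto. intros x [<-|[]]; auto.
  - destruct Vu as [HA [_ [bs [Hrg [_ HB]]]]]. apply fresh_instance; auto.
    eapply sub_in_ele; eauto. rewrite Hrg; simpl; auto.
  - exists (Str M ""). split; auto. intros x [<-|[]]; auto.
Qed.

Definition witness_op (u : uat) (p : nodeid) (c f : tree) : op :=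
  match u with
  | UIns _ _ => OIns p f | UDel _ _ => ODel (tid c) | URep _ _ _ => ORepT (tid c) f
  | URepS _ => ORepS (tid c) "a" end.

Definition witness_result (u : uat) (p : nodeid) (C : label) (c f : tree) : tree :=
  match u with
  | UIns _ _ => Elt p C [c; f] | UDel _ _ => Elt p C [] | URep _ _ _ => Elt p C [f]
  | URepS _ => Elt p C [Str (tid c) "a"] end.

Lemma witness_apply u K p C c f : NoDup (ids (plug K (Elt p C [c]))) -> fits_site u c ->
  apply (witness_op u p c f) (plug K (Elt p C [c])) = plug K (witness_result u p C c f).
Proof.
  intros Hnd Hs.
  destruct (child_id_unique K p C [] c [] Hnd) as [F1 [F2 [F3 F4]]].
  destruct (node_id_unique K p C [c] Hnd) as [G1 G2].
  destruct u; simpl.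
  - rewrite ins_plug, ins_local; auto.
  - rewrite del_plug by auto. change [c] with ([] ++ c :: []). rewrite del_local; auto.
  - rewrite rep_plug by auto. change [c] with ([] ++ c :: []). rewrite rep_local; auto.
  - destruct Hs as [n ->]. simpl in *. rewrite reps_plug by auto.
    change [Str n ""] with ([] ++ Str n "" :: []). rewrite reps_local; auto.
Qed.

Lemma witness_update D u K p c f : wf_dtd D -> valid_uat D u ->
  NoDup (ids (plug K (Elt p (uat_elt u) [c]))) -> conf D (plug K (Elt p (uat_elt u) [c])) ->
  fits_site u c -> fresh_fits D u f -> disjoint (ids f) (ids (plug K (Elt p (uat_elt u) [c]))) ->
  valid_op (witness_op u p c f) (plug K (Elt p (uat_elt u) [c])) /\
  matches D (plug K (Elt p (uat_elt u) [c])) (witness_op u p c f) u /\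
  ~ iso (apply (witness_op u p c f) (plug K (Elt p (uat_elt u) [c]))) (plug K (Elt p (uat_elt u) [c])).
Proof.
  intros Hwf Vu Hnd Hc Hs Hf Hdis.
  set (T := plug K (Elt p (uat_elt u) [c])) in *.
  assert (Sp : subtree (Elt p (uat_elt u) [c]) T) by apply plug_subtree.
  assert (Sc : subtree c T) by (eapply subtree_trans; [|exact Sp]; econstructor; [left; reflexivity|constructor]).
  assert (Ip : In p (ids T)) by (apply (subtree_ids _ _ Sp); left; auto).
  assert (Ic : In (tid c) (ids T)) by (apply (subtree_ids _ _ Sc); apply tid_in_ids).
  assert (NL : forall l, tlab c = l -> node_lab T (tid c) l) by (intros l E; exists c; auto).
  assert (PL : parent_lab T (tid c) (uat_elt u)) by (exists p, [c], c; split; auto; split; auto; left; auto).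
  assert (VM : valid_op (witness_op u p c f) T /\ matches D T (witness_op u p c f) u).
  { destruct u as [A E|A E|A B B'|A]; simpl in *.
    - exact (conj (conj Ip Hdis) (conj (ex_intro _ (Elt p A [c]) (conj Sp (conj eq_refl eq_refl))) Hf)).
    - exact (conj Ic (conj (NL _ Hs) PL)).
    - exact (conj (conj Ic Hdis) (conj (NL _ Hs) (conj PL (conj Hf (proj1 (proj2 Vu)))))).
    - destruct Hs as [n ->]. simpl in *. exact (conj Ic (conj (NL None eq_refl) PL)). }
  destruct VM as [HV HM]. split; auto. split; auto.
  eapply (nontrivial_update D T _ u); eauto.
  intros n s E. destruct u; simpl in E; inversion E; subst. simpl in Hs. destruct Hs as [m ->].
  exists ""%string. split; auto. discriminate.
Qed.

Lemma replace_step D S X K x b h Y1 Y' : (forall u, S u -> valid_uat D u) ->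
  NoDup (ids (plug K (Elt x X [b]))) -> conf D (plug K (Elt x X [b])) ->
  GA D S X Y1 Y' -> tlab b = Some Y1 -> ID D Y' h -> disjoint (ids h) (ids (plug K (Elt x X [b]))) ->
  valid_op (ORepT (tid b) h) (plug K (Elt x X [b])) /\ in_sem D S (plug K (Elt x X [b])) (ORepT (tid b) h) /\
  apply (ORepT (tid b) h) (plug K (Elt x X [b])) = plug K (Elt x X [h]) /\
  NoDup (ids (plug K (Elt x X [h]))) /\ conf D (plug K (Elt x X [h])).
Proof.
  intros HS Hnd Hc HG Hb Hh Hdis.
  set (T := plug K (Elt x X [b])) in *.
  assert (Sp : subtree (Elt x X [b]) T) by apply plug_subtree.
  assert (Sb : subtree b T) by (eapply subtree_trans; [|exact Sp]; econstructor; [left; reflexivity|constructor]).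
  assert (Ib : In (tid b) (ids T)) by (apply (subtree_ids _ _ Sb); apply tid_in_ids).
  destruct HG as [bs [HX [Hrg [H1 [H2 HSu]]]]].
  assert (Vu := HS _ HSu).
  assert (HM : matches D T (ORepT (tid b) h) (URep X Y1 Y')).
  { simpl. split; [exists b; auto|]. split; [exists x, [b], b; split; auto; split; auto; left; auto|].
    split; auto. destruct Vu as [_ [? _]]; auto. }
  assert (HV : valid_op (ORepT (tid b) h) T) by (simpl; auto).
  assert (HA : apply (ORepT (tid b) h) T = plug K (Elt x X [h])).
  { destruct (child_id_unique K x X [] b [] Hnd) as [F1 [F2 [F3 F4]]]. simpl. unfold T.
    rewrite rep_plug by auto. change [b] with ([] ++ b :: []). rewrite rep_local; auto. }
  destruct (step_effect_matching D T _ _ Hnd Hc HV HM Vu) as [N1 [N2 _]]. rewrite HA in N1, N2.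
  repeat split; auto. exists (URep X Y1 Y'). auto.
Qed.

Lemma replace_chain D S X : wf_dtd D -> (forall u, S u -> valid_uat D u) ->
  forall Y1 Y2, clos_trans label (GA D S X) Y1 Y2 ->
  forall K x b g, NoDup (ids (plug K (Elt x X [b]))) -> conf D (plug K (Elt x X [b])) ->
  tlab b = Some Y1 -> ID D Y2 g -> disjoint (ids g) (ids (plug K (Elt x X [b]))) ->
  exists os, os <> [] /\ allowed D S (plug K (Elt x X [b])) os /\
             apply_seq os (plug K (Elt x X [b])) = plug K (Elt x X [g]).
Proof.
  intros Hwf HS Y1 Y2 H. apply clos_trans_t1n in H. induction H as [Y1 Y2 HG|Y1 Y' Y2 HG Hrest IH];
    intros K x b g Hnd Hc Hb Hg Hdis.
  - destruct (replace_step D S X K x b g Y1 Y2 HS Hnd Hc HG Hb Hg Hdis) as [V [I [A _]]].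
    exists [ORepT (tid b) g]. split; [discriminate|]. split. simpl; auto. simpl in A |- *. rewrite A. auto.
  - assert (InY : In Y' (ele D)).
    { destruct HG as [bs [HX [Hrg [_ [H2 _]]]]]. eapply sub_in_ele; eauto. rewrite Hrg; auto. }
    set (M := fresh_bound (plug K (Elt x X [b])) + fresh_bound g).
    destruct (fresh_instance D Y' M Hwf InY) as [h [Hh Hhfresh]].
    assert (Hdh : disjoint (ids h) (ids (plug K (Elt x X [b])))).
    { intros y H1 H2. apply Hhfresh in H1. apply fresh_bound_gt in H2. unfold M in H1. lia. }
    destruct (replace_step D S X K x b h Y1 Y' HS Hnd Hc HG Hb Hh Hdh) as [V [I [A [N1 N2]]]].
    assert (Hdg : disjoint (ids g) (ids (plug K (Elt x X [h])))).
    { intros y H1 H2. apply (Permutation_in _ (ids_plug _ _)) in H2. apply in_app_or in H2. destruct H2 as [H2|H2].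
      - apply (Hdis y H1). apply in_plug_ctx; auto.
      - simpl in H2. destruct H2 as [<-|H2].
        + apply (Hdis x H1). apply in_plug_s. left; auto.
        + rewrite app_nil_r in H2. apply Hhfresh in H2. apply fresh_bound_gt in H1. unfold M in H2. lia. }
    destruct (IH K x h g N1 N2) as [os [Hne [Hal Hap]]]; auto. apply Hh.
    exists (ORepT (tid b) h :: os). split; [discriminate|]. split.
    + simpl. split; auto. split; auto. simpl in A. rewrite A. auto.
    + simpl in A |- *. rewrite A. auto.
Qed.

Fixpoint ctx_app (K1 K2 : ctx) : ctx :=
  match K1 with Hole => K2 | Frame n A l k r => Frame n A l (ctx_app k K2) r end.

Lemma plug_app K1 K2 s : plug (ctx_app K1 K2) s = plug K1 (plug K2 s).
Proof. induction K1; simpl; auto. rewrite IHK1; auto. Qed.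

Lemma valid_elt D u : valid_uat D u -> In (uat_elt u) (ele D).
Proof. destruct u; simpl; tauto. Qed.

Lemma tlab_witness_result u p C c f : tlab (witness_result u p C c f) = Some C.
Proof. destruct u; auto. Qed.

Lemma ids_plug_add_child K x A b y : In y (ids (plug K (Elt x A []))) -> In y (ids (plug K (Elt x A [b]))).
Proof.
  intros H. apply (Permutation_in _ (ids_plug _ _)) in H. apply in_app_or in H. destruct H as [H|[<-|[]]].
  apply in_plug_ctx; auto. apply in_plug_s; left; auto.
Qed.

(* For clauses 2 and 3: if Y <= elt(u) and an X node may have a single Y
   child, some document has such a node whose child b contains a site for
   u; applying the witness update inside b yields a conforming Y tree r. *)
Lemma deep_witness D u X Y (Hwf : wf_dtd D) (Vu : valid_uat D u) (HX : In X (ele D))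
  (Hlang : lang (rg D X) [Some Y]) (HYC : leD D Y (uat_elt u)) :
  exists T K x b o0 r, IDroot D T /\ T = plug K (Elt x X [b]) /\ tlab b = Some Y /\
    valid_op o0 T /\ matches D T o0 u /\ ~ iso (apply o0 T) T /\
    apply o0 T = plug K (Elt x X [r]) /\ conf D r /\ tlab r = Some Y.
Proof.
  destruct (site_child_exists D u Hwf Vu) as [c0 [Hc0 [Hs0 Hsig0]]].
  set (C := uat_elt u) in *.
  destruct (path_ctx D Hwf Y C HYC (Elt 0 C [c0]) Hsig0 eq_refl) as [K2 [HK2 HK2t]].
  assert (Hs0' : conf D (Elt 0 X [plug K2 (Elt 0 C [c0])])).
  { constructor; auto. simpl. rewrite HK2t. auto. }
  destruct (embed_in_document D Hwf X _ HX Hs0' eq_refl) as [T [K [s [HT [-> Es]]]]].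
  simpl in Es. destruct (erase_single_child s 0 X _ Es) as [x [b [-> Eb]]].
  destruct (erase_decomp K2 _ b Eb) as [K2' [sg [-> Esg]]].
  simpl in Esg. destruct (erase_single_child sg 0 C c0 Esg) as [p [c [-> Ec]]].
  assert (Hsuit : fits_site u c) by (eapply fits_site_erase; eauto).
  destruct HT as [Hnd [Hrt Hc]].
  set (T := plug K (Elt x X [plug K2' (Elt p C [c])])) in *.
  set (Kc := ctx_app K (Frame x X [] K2' [])).
  assert (ET : plug Kc (Elt p C [c]) = T) by (unfold Kc; rewrite plug_app; reflexivity).
  destruct (fresh_exists D u Hwf Vu (fresh_bound T)) as [f [Hf Hfb]].
  assert (Hdis : disjoint (ids f) (ids (plug Kc (Elt p C [c])))).
  { rewrite ET. intros y Hy1 Hy2. apply Hfb in Hy1. apply fresh_bound_gt in Hy2. lia. }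
  rewrite <- ET in Hnd, Hc.
  destruct (witness_update D u Kc p c f Hwf Vu Hnd Hc Hsuit Hf Hdis) as [HV [HM HN]].
  change (uat_elt u) with C in HV, HM, HN.
  assert (HA : apply (witness_op u p c f) T = plug K (Elt x X [plug K2' (witness_result u p C c f)])).
  { rewrite <- ET. rewrite witness_apply; auto. unfold Kc. rewrite plug_app. reflexivity. }
  rewrite ET in HV, HM, HN, Hnd, Hc.
  destruct (step_effect_matching D T _ _ Hnd Hc HV HM Vu) as [_ [Hc' _]].
  rewrite HA in Hc'. apply conf_plug_in in Hc'. inversion Hc' as [|? ? ? _ _ Hf']. inversion Hf'; subst.
  exists T, K, x, (plug K2' (Elt p C [c])), (witness_op u p c f), (plug K2' (witness_result u p C c f)).
  assert (Htb : tlab (plug K2' (Elt p C [c])) = Some Y).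
  { rewrite (erase_tlab _ _ Eb). auto. }
  repeat split; auto.
  rewrite <- Htb. apply tlab_plug. rewrite tlab_witness_result. auto.
Qed.

Lemma delete_insert_step D S A B K x b g : rg D A = RStar B ->
  S (UDel A B) -> S (UIns A B) -> NoDup (ids (plug K (Elt x A [b]))) ->
  tlab b = Some B -> ID D B g -> disjoint (ids g) (ids (plug K (Elt x A [b]))) ->
  allowed D S (plug K (Elt x A [b])) [ODel (tid b); OIns x g] /\
  apply_seq [ODel (tid b); OIns x g] (plug K (Elt x A [b])) = plug K (Elt x A [g]).
Proof.
  intros Hrg Sdel Sins Hnd Htb Hg Hdis.
  destruct (child_id_unique K x A [] b [] Hnd) as [F1 [F2 [F3 F4]]].
  destruct (node_id_unique K x A [b] Hnd) as [G1 G2].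
  assert (Sp : subtree (Elt x A [b]) (plug K (Elt x A [b]))) by apply plug_subtree.
  assert (Sb : subtree b (plug K (Elt x A [b])))
    by (eapply subtree_trans; [|exact Sp]; econstructor; [left; reflexivity|constructor]).
  assert (E1 : apply (ODel (tid b)) (plug K (Elt x A [b])) = plug K (Elt x A [])).
  { simpl. rewrite del_plug by auto. change [b] with ([] ++ b :: []). rewrite del_local; auto. }
  assert (E2 : apply (OIns x g) (plug K (Elt x A [])) = plug K (Elt x A [g])).
  { simpl. rewrite ins_plug by auto. rewrite ins_local; simpl; auto. }
  split.
  - simpl. split; [apply (subtree_ids _ _ Sb), tid_in_ids|]. split.
    + exists (UDel A B). split; auto. split; [exists b; auto|].
      exists x, [b], b. repeat split; auto. left; auto.
    + simpl in E1. rewrite E1. split; [split|split; auto].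
      * apply in_plug_s. left; auto.
      * intros y H1 H2. apply (Hdis y H1). apply ids_plug_add_child; auto.
      * exists (UIns A B). split; auto. split; auto.
        exists (Elt x A []). split; [apply plug_subtree|auto].
  - simpl in E1, E2 |- *. rewrite E1, E2. reflexivity.
Qed.

Definition emulated (D : dtd) (S : uset) (u : uat) : Prop :=
  exists t os o0, IDroot D t /\ os <> [] /\ allowed D S t os /\
    valid_op o0 t /\ matches D t o0 u /\ ~ iso (apply o0 t) t /\
    iso (apply_seq os t) (apply o0 t).

Lemma emulated_not_forbidden D P u : consistent D P -> emulated D (pA P) u -> ~ pF P u.
Proof.
  intros Hcons [t [os [o0 [Ht [Hne [Hal [Hv [Hm [Hnt Hiso]]]]]]]]] Fu.
  apply Hcons. exists t, os, o0. do 3 (split; [auto|]). split; [exists u; auto|]. auto.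
Qed.

Section Completeness.

Variable D : dtd.
Variable S : uset.
Hypothesis Hwf : wf_dtd D.
Hypothesis HS : forall u, S u -> valid_uat D u.

Lemma emulated_allowed u : valid_uat D u -> S u -> emulated D S u.
Proof.
  intros Vu Su.
  destruct (site_child_exists D u Hwf Vu) as [c0 [Hc0 [Hs0 Hsig0]]].
  destruct (embed_in_document D Hwf (uat_elt u) _ (valid_elt D u Vu) Hsig0 eq_refl)
    as [T [K [s [HT [-> Es]]]]].
  simpl in Es. destruct (erase_single_child s 0 _ c0 Es) as [p [c [-> Ec]]].
  assert (Hsuit : fits_site u c) by (eapply fits_site_erase; eauto).
  pose proof HT as [Hnd [_ Hc]].
  destruct (fresh_exists D u Hwf Vu (fresh_bound (plug K (Elt p (uat_elt u) [c]))))
    as [f [Hf Hfb]].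
  assert (Hdis : disjoint (ids f) (ids (plug K (Elt p (uat_elt u) [c])))).
  { intros y Hy1 Hy2. apply Hfb in Hy1. apply fresh_bound_gt in Hy2. lia. }
  destruct (witness_update D u K p c f Hwf Vu Hnd Hc Hsuit Hf Hdis) as [HV [HM HN]].
  exists (plug K (Elt p (uat_elt u) [c])), [witness_op u p c f], (witness_op u p c f).
  split; [exact HT|]. split; [discriminate|].
  split; [simpl; split; [exact HV|split; [exists u; auto|exact I]]|].
  split; [exact HV|split; [exact HM|split; [exact HN|apply iso_refl]]].
Qed.

(* Clause 2 of T: below an A node whose B child can be deleted and
   re-inserted, any update at a descendant type of B is emulated by
   replacing the whole B subtree. *)
Lemma emulated_ins_del u A B : valid_uat D u -> In A (ele D) -> rg D A = RStar B ->
  S (UIns A B) -> S (UDel A B) -> leD D B (uat_elt u) -> emulated D S u.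
Proof.
  intros Vu HAe Hrg Sins Sdel HBu.
  assert (Hlang : lang (rg D A) [Some B]) by (rewrite Hrg; simpl; auto).
  destruct (deep_witness D u A B Hwf Vu HAe Hlang HBu)
    as [T [K [x [b [o0 [r [HT [ET [Htb [HV [HM [HN [Hap [Hcr Htr]]]]]]]]]]]]]].
  set (g := number (fresh_bound T) r).
  assert (Hg : ID D B g) by (apply renumber_ID; auto).
  assert (Hdg : disjoint (ids g) (ids T)).
  { intros y H1 H2. apply number_ge in H1. apply fresh_bound_gt in H2. lia. }
  pose proof HT as [Hnd _]. subst T.
  destruct (delete_insert_step D S A B K x b g Hrg Sdel Sins Hnd Htb Hg Hdg) as [Hal Happ].
  exists (plug K (Elt x A [b])), [ODel (tid b); OIns x g], o0.
  split; [exact HT|]. split; [discriminate|]. split; [exact Hal|].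
  split; [exact HV|split; [exact HM|split; [exact HN|]]].
  rewrite Happ, Hap. apply erase_iso, erase_plug. simpl. unfold g. rewrite number_erase. auto.
Qed.

(* Clause 3 of T: a replace cycle through Bi under X lets any update at a
   descendant type of Bi be emulated by replacing the whole Bi subtree. *)
Lemma emulated_cycle u X bs Bi : valid_uat D u -> In X (ele D) -> rg D X = RDisj bs ->
  In Bi bs -> GAplus D S X Bi Bi -> leD D Bi (uat_elt u) -> emulated D S u.
Proof.
  intros Vu HXe Hrg HBi Hcyc HBu.
  assert (Hlang : lang (rg D X) [Some Bi]) by (rewrite Hrg; simpl; eauto).
  destruct (deep_witness D u X Bi Hwf Vu HXe Hlang HBu)
    as [T [K [x [b [o0 [r [HT [ET [Htb [HV [HM [HN [Hap [Hcr Htr]]]]]]]]]]]]]].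
  set (g := number (fresh_bound T) r).
  assert (Hg : ID D Bi g) by (apply renumber_ID; auto).
  assert (Hdg : disjoint (ids g) (ids T)).
  { intros y H1 H2. apply number_ge in H1. apply fresh_bound_gt in H2. lia. }
  pose proof HT as [Hnd [_ Hc]]. subst T.
  destruct (replace_chain D S X Hwf HS Bi Bi Hcyc K x b g Hnd Hc Htb Hg Hdg)
    as [os [Hne [Hal Happ]]].
  exists (plug K (Elt x X [b])), os, o0.
  split; [exact HT|]. split; [exact Hne|]. split; [exact Hal|].
  split; [exact HV|split; [exact HM|split; [exact HN|]]].
  rewrite Happ, Hap. apply erase_iso, erase_plug. simpl. unfold g. rewrite number_erase. auto.
Qed.

Lemma emulated_path X bs Bi Bk : In X (ele D) -> rg D X = RDisj bs -> In Bi bs -> In Bk bs ->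
  Bi <> Bk -> GAplus D S X Bi Bk -> emulated D S (URep X Bi Bk).
Proof.
  intros HXe Hrg HBi HBk Hne Hpath.
  assert (Vu : valid_uat D (URep X Bi Bk)) by (repeat split; eauto).
  assert (InBi : In Bi (ele D)) by (apply (sub_in_ele D X Bi Hwf HXe); rewrite Hrg; auto).
  assert (InBk : In Bk (ele D)) by (apply (sub_in_ele D X Bk Hwf HXe); rewrite Hrg; auto).
  destruct (tree_exists D Hwf Bi InBi) as [b0 [Hb0 Htb0]].
  assert (Hs0 : conf D (Elt 0 X [b0])).
  { constructor; auto. rewrite Hrg. simpl. rewrite Htb0. eauto. }
  destruct (embed_in_document D Hwf X _ HXe Hs0 eq_refl) as [T [K [s [HT [-> Es]]]]].
  simpl in Es. destruct (erase_single_child s 0 X b0 Es) as [x [b [-> Eb]]].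
  pose proof HT as [Hnd [_ Hc]].
  assert (Htb : tlab b = Some Bi) by (rewrite (erase_tlab _ _ Eb); auto).
  destruct (fresh_instance D Bk (fresh_bound (plug K (Elt x X [b]))) Hwf InBk) as [g [Hg Hgfresh]].
  assert (Hdg : disjoint (ids g) (ids (plug K (Elt x X [b])))).
  { intros y H1 H2. apply Hgfresh in H1. apply fresh_bound_gt in H2. lia. }
  (* the forbidden update itself: one replacement Bi -> Bk *)
  set (S1 := fun v => v = URep X Bi Bk).
  assert (HG1 : GA D S1 X Bi Bk) by (exists bs; repeat split; auto).
  destruct (replace_step D S1 X K x b g Bi Bk (fun v E => eq_ind_r _ Vu E) Hnd Hc HG1 Htb Hg Hdg)
    as [HV [[v [Ev HM]] [HAp _]]].
  unfold S1 in Ev. subst v.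
  destruct (replace_chain D S X Hwf HS Bi Bk Hpath K x b g Hnd Hc Htb Hg Hdg)
    as [os [Hne2 [Hal Happ]]].
  exists (plug K (Elt x X [b])), os, (ORepT (tid b) g).
  split; [exact HT|]. split; [exact Hne2|]. split; [exact Hal|].
  split; [exact HV|split; [exact HM|split]].
  - apply (nontrivial_update D _ _ (URep X Bi Bk)); auto. intros n s' E; discriminate.
  - rewrite Happ, HAp. apply iso_refl.
Qed.

Lemma top_emulated u : valid_uat D u -> Top D S u -> emulated D S u.
Proof.
  intros Vu [Su|[[_ [A [B [HAe [Hrg [Hins [Hdel HBu]]]]]]]|
    [[_ [X [bs [Bi [HXe [Hrg [HBi [Hcyc HBu]]]]]]]]|
     [X [bs [Bi [Bk [HXe [Hrg [HBi [HBk [Hne [Hpath ->]]]]]]]]]]]]].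
  - apply emulated_allowed; auto.
  - eapply emulated_ins_del; eauto.
  - eapply emulated_cycle; eauto.
  - eapply emulated_path; eauto.
Qed.

End Completeness.

Lemma consistent_top_disjoint D P : wf_dtd D -> is_policy D P -> consistent D P ->
  forall u, Top D (pA P) u -> ~ pF P u.
Proof.
  intros Hwf [HA [HF _]] Hcons u HT Fu.
  exact (emulated_not_forbidden D P u Hcons (top_emulated D (pA P) Hwf HA u (HF u Fu) HT) Fu).
Qed.

Lemma GA_lift D S u A x y : valid_uat D u -> leD D A (uat_elt u) ->
  GA D (fun v => valid_uat D v /\ Top D S v) A x y -> Top D S u \/ clos_trans label (GA D S A) x y.
Proof.
  intros Vu HAu [bs [HA [Hrg [Hx [Hy [_ HT]]]]]].
  destruct HT as [H1|[[_ [A' [B' [H1 [H2 [H3 [H4 H5]]]]]]]|[[_ [A' [bs' [B' [H1 [H2 [H3 [H4 H5]]]]]]]]|[A' [bs' [Bi [Bk [H1 [H2 [H3 [H4 [H5 [H6 E]]]]]]]]]]]]].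
  - right. apply t_step. exists bs. auto.
  - left. right; left. split; auto. exists A', B'. repeat split; auto. eapply rt_trans; eauto.
  - left. right; right; left. split; auto. exists A', bs', B'. repeat split; auto. eapply rt_trans; eauto.
  - inversion E; subst. right. auto.
Qed.

Lemma path_lift D S u A x y : valid_uat D u -> leD D A (uat_elt u) ->
  clos_trans label (GA D (fun v => valid_uat D v /\ Top D S v) A) x y -> Top D S u \/ clos_trans label (GA D S A) x y.
Proof.
  intros Vu HAu. induction 1.
  - eapply GA_lift; eauto.
  - destruct IHclos_trans1, IHclos_trans2; auto. right; eapply t_trans; eauto.
Qed.

Lemma top_lift D S u v : valid_uat D u -> leD D (uat_elt v) (uat_elt u) -> (forall a b c, v <> URep a b c) ->
  Top D S v -> Top D S u \/ S v.
Proof.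
  intros Vu Hl Hn HT.
  destruct HT as [H1|[[_ [A' [B' [H1 [H2 [H3 [H4 H5]]]]]]]|[[_ [A' [bs' [B' [H1 [H2 [H3 [H4 H5]]]]]]]]|[A' [bs' [Bi [Bk [H1 [H2 [H3 [H4 [H5 [H6 E]]]]]]]]]]]]].
  - right; auto.
  - left. right; left. split; auto. exists A', B'. repeat split; auto. eapply rt_trans; eauto.
  - left. right; right; left. split; auto. exists A', bs', B'. repeat split; auto. eapply rt_trans; eauto.
  - exfalso; eapply Hn; eauto.
Qed.

Lemma Top_idem D S u : valid_uat D u -> Top D (fun v => valid_uat D v /\ Top D S v) u -> Top D S u.
Proof.
  intros Vu HT.
  destruct HT as [[_ H1]|[[_ [A [B [H1 [H2 [H3 [H4 H5]]]]]]]|[[_ [A [bs [Bi [H1 [H2 [H3 [H4 H5]]]]]]]]|[A [bs [Bi [Bk [H1 [H2 [H3 [H4 [H5 [H6 E]]]]]]]]]]]]].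
  - auto.
  - assert (HAu : leD D A (uat_elt u)). { eapply rt_trans; [|exact H5]. apply rt_step. split; auto. rewrite H2; simpl; auto. }
    destruct H3 as [_ H3]. destruct H4 as [_ H4].
    destruct (top_lift D S u (UIns A B) Vu HAu ltac:(intros; discriminate) H3) as [?|S3]; auto.
    destruct (top_lift D S u (UDel A B) Vu HAu ltac:(intros; discriminate) H4) as [?|S4]; auto.
    right; left. split; auto. exists A, B. repeat split; auto.
  - assert (HAu : leD D A (uat_elt u)). { eapply rt_trans; [|exact H5]. apply rt_step. split; auto. rewrite H2; simpl; auto. }
    destruct (path_lift D S u A Bi Bi Vu HAu H4) as [?|HP]; auto.
    right; right; left. split; auto. exists A, bs, Bi. repeat split; auto.
  - subst u. destruct (path_lift D S _ A Bi Bk Vu (rt_refl _ _ _) H6) as [?|HP]; auto.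
    right; right; right. exists A, bs, Bi, Bk. repeat split; auto.
Qed.

Lemma allowed_mono D S1 S2 t os : (forall u, S1 u -> S2 u) -> allowed D S1 t os -> allowed D S2 t os.
Proof.
  revert t. induction os; simpl; intros t H Hal; auto. destruct Hal as [? [[u [Hu Hm]] ?]].
  split; auto. split; eauto. exists u; auto.
Qed.

(* A consistent extension witnesses consistency: allowing more and
   forbidding more only makes inconsistencies easier to find. *)
Lemma consistent_of_extension D P Q : extends P Q -> consistent D Q -> consistent D P.
Proof.
  intros [Ha Hf] HQ [t [os [o0 [Ht [Hne [Hal [[u [Fu Hm]] Hrest]]]]]]].
  apply HQ. exists t, os, o0. split; [exact Ht|]. split; [exact Hne|].
  split; [eapply allowed_mono; eauto|]. split; [exists u; auto|exact Hrest].
Qed.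

Definition top_policy (D : dtd) (P : policy) : policy :=
  mkPolicy (fun u => valid_uat D u /\ Top D (pA P) u) (fun u => valid_uat D u /\ ~ Top D (pA P) u).

Lemma top_policy_extension D P : wf_dtd D -> is_policy D P ->
  (forall u, Top D (pA P) u -> ~ pF P u) ->
  is_policy D (top_policy D P) /\ total D (top_policy D P) /\
  extends P (top_policy D P) /\ consistent D (top_policy D P).
Proof.
  intros Hwf [HA [HF _]] HT. split; [|split; [|split]].
  - split; [|split]; simpl; tauto.
  - intros u Vu. simpl. destruct (classic (Top D (pA P) u)); auto.
  - split; simpl; intros u Hu; split; auto.
    + left; auto.
    + intro H. exact (HT u H Hu).
  - apply top_disjoint_consistent; auto; simpl; try tauto.
    intros u HTu [Vu NTu]. apply NTu. apply Top_idem; auto.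
Qed.

Theorem theorem2 (D : dtd) (P : policy) :
  wf_dtd D -> is_policy D P ->
  (quasiconsistent D P <-> consistent D P) /\
  (consistent D P <-> (forall u, Top D (pA P) u -> ~ pF P u)).
Proof.
  intros Hwf Hpol. pose proof Hpol as [HA [HF _]].
  assert (Hequiv : consistent D P <-> (forall u, Top D (pA P) u -> ~ pF P u)).
  { split; [apply consistent_top_disjoint; auto|apply top_disjoint_consistent; auto]. }
  split; [split|exact Hequiv].
  - intros [Q [_ [_ [Hext HQ]]]]. exact (consistent_of_extension D P Q Hext HQ).
  - intros Hc. exists (top_policy D P). apply top_policy_extension; auto. apply Hequiv; auto.
Qed.
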